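(* The algebras $\mathrm{Cl}_q(\mathfrak{sl}_2)$ and $\bigwedge_qV_{2\pi}$, equipped with the Lie derivatives, contractions and differentials described in the context, are quantised $\mathfrak{sl}_2$-differential algebras.
   Context: Fix $q\in\mathbb{C}$ nonzero and not a root of unity. $U_q(\mathfrak{sl}_2)$ is the Hopf algebra generated by $E,F,K,K^{-1}$ with $KE=q^2EK$, $KF=q^{-2}FK$, $KK^{-1}=K^{-1}K=1$, $EF-FE=\frac{K-K^{-1}}{q-q^{-1}}$, coproduct $\Delta E=E\otimes K+1\otimes E$, $\Delta F=F\otimes 1+K^{-1}\otimes F$, $\Delta K^{\pm1}=K^{\pm1}\otimes K^{\pm1}$. $\mathfrak{sl}_q(2)\subset U_q(\mathfrak{sl}_2)$ is the span of $X=E$, $Z=q^{-2}EF-FE$, $Y=KF$, stable under the left adjoint action and isomorphic to the 3-dimensional type 1 simple module $V_{2\pi}$, with basis $v_2=X$, $v_0=Z$, $v_{-2}=Y$. The category of finite-dimensional type 1 modules is braided via the universal $R$-matrix braiding $\sigma$; the normalised braiding is $\tilde\sigma_{V,W}=\sigma_{V,W}\circ(\sigma_{W,V}\circ\sigma_{V,W})^{-1/2}$. The quantum exterior algebra $\bigwedge_qV_{2\pi}=T(V_{2\pi})/\langle v\otimes w+\tilde\sigma(v\otimes w)\rangle$ is generated by odd $v_2,v_0,v_{-2}$ with $v_2\wedge v_2=0=v_{-2}\wedge v_{-2}$, $v_0\wedge v_2=-q^{-2}v_2\wedge v_0$, $v_{-2}\wedge v_0=-q^{-2}v_0\wedge v_{-2}$,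 $v_0\wedge v_0=\frac{1-q^4}{q^3}v_2\wedge v_{-2}$, $v_{-2}\wedge v_2=-v_2\wedge v_{-2}$. Fix a nonzero $c\in\mathbb{C}[q,q^{-1}]$. $\mathrm{Cl}_q(\mathfrak{sl}_2)$ is the filtered superalgebra generated by odd $v_2,v_0,v_{-2}$ with $v_2v_2=0$, $v_{-2}v_{-2}=0$, $v_0v_2=-q^{-2}v_2v_0$, $v_{-2}v_0=-q^{-2}v_0v_{-2}$, $v_0v_0=\frac{1-q^4}{q^3}v_2v_{-2}+\frac{q^2+1}{q}c$, $v_{-2}v_2=-v_2v_{-2}+\frac{q^2+1}{q^2}c$; its associated graded algebra is $\bigwedge_qV_{2\pi}$. Both are $U_q(\mathfrak{sl}_2)$-module algebras with actions $\triangleright$ induced from $V_{2\pi}$. Let $[x,y]_{\tilde\sigma}:=(m-(-1)^{p(x)p(y)}m\circ\tilde\sigma)(x\otimes y)$ on $\mathrm{Cl}_q(\mathfrak{sl}_2)$. Structures on $\mathrm{Cl}_q(\mathfrak{sl}_2)$: $L_x\omega=x\triangleright\omega$ for $x\in U_q(\mathfrak{sl}_2)$; $\iota_x\omega=\frac12[x,\omega]_{\tilde\sigma}$ for $x\in V_{2\pi}$, extended to an action of $\bigwedge_qV_{2\pi}$; $\mathrm{d}_{\mathrm{Cl}_q}\omega=\gamma_q\omega-(-1)^{p(\omega)}\omega\gamma_q$ with $\gamma_q=-\frac{1}{2c^2}(cv_0+v_2v_0v_{-2})$. Structures on $\bigwedge_qV_{2\pi}$: $L_x$ the natural $U_q(\mathfrak{sl}_2)$-action;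 $\iota_x$ the associated graded maps of the contractions on $\mathrm{Cl}_q(\mathfrak{sl}_2)$ (e.g. $\iota_{v_2}v_{-2}=c$, $\iota_{v_0}v_0=q^{-3}(1+q^2)c$, $\iota_{v_{-2}}v_2=q^{-2}c$, other degree-one pairings zero); $\mathrm{d}_{\wedge_q}$ the associated graded of $\mathrm{d}_{\mathrm{Cl}_q}$, which is the graded derivation with $\mathrm{d}_{\wedge_q}v_2=-\frac1cv_2\wedge v_0$, $\mathrm{d}_{\wedge_q}v_0=\frac{1+q^2}{qc}v_2\wedge v_{-2}$, $\mathrm{d}_{\wedge_q}v_{-2}=-\frac1cv_0\wedge v_{-2}$. Definition: a supervector space $W$ is a quantised $\mathfrak{sl}_2$-differential space if it is equipped with (1) Lie derivatives $L_x\in\mathrm{End}(W)$, $x\in U_q(\mathfrak{sl}_2)$, defining a $U_q(\mathfrak{sl}_2)$-module structure; (2) a $U_q(\mathfrak{sl}_2)$-equivariant action $\iota:\bigwedge_qV_{2\pi}\otimes W\to W$; (3) a $U_q(\mathfrak{sl}_2)$-equivariant differential $\mathrm{d}_W:W\to W$ (with $\mathrm{d}_W^2=0$); (4) satisfying $L_x=\iota_x\circ\mathrm{d}_W+\mathrm{d}_W\circ\iota_x$ for $x\in\mathfrak{sl}_q(2)$. An algebra $A$ is a quantised $\mathfrak{sl}_2$-differential algebra if it is such a space with $L_x(ab)=\sum(L_{x_{(1)}}a)(L_{x_{(2)}}b)$ for all $a,b\in A$, $x\in U_q(\mathfrak{sl}_2)$, and $\mathrm{d}_A$ satisfies the graded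 Leibniz rule. *)

From mathcomp Require Import all_boot all_order all_algebra.
From mathcomp Require Import complex.
From mathcomp Require Import reals.

Set Implicit Arguments.
Unset Strict Implicit.
Unset Printing Implicit Defensive.

Import Order.TTheory GRing.Theory Num.Theory.
Local Open Scope ring_scope.

Section QDiff.
Variable K : fieldType.
Variable q : K.

(* V_{2pi}: basis index 'I_3 : 0 <-> v_2 = X, 1 <-> v_0 = Z, 2 <-> v_{-2} = Y.
   Cl_q / /\_q : basis index 'I_8 of ordered (PBW) monomials
   v_2^a v_0^b v_{-2}^c :
     0 <-> 1,        1 <-> v2,      2 <-> v0,      3 <-> v-2,
     4 <-> v2 v0,    5 <-> v2 v-2,  6 <-> v0 v-2,  7 <-> v2 v0 v-2.       *)

Definition g3 (n : nat) : 'I_3 := inord n.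
Definition i8 (n : nat) : 'I_8 := inord n.

Definition monw (m : 'I_8) : seq 'I_3 :=
  match val m with
  | 0 => [::]
  | 1 => [:: g3 0]
  | 2 => [:: g3 1]
  | 3 => [:: g3 2]
  | 4 => [:: g3 0; g3 1]
  | 5 => [:: g3 0; g3 2]
  | 6 => [:: g3 1; g3 2]
  | _ => [:: g3 0; g3 1; g3 2]
  end.

Definition deg (m : 'I_8) : nat := size (monw m).

(* half-weights: K acts on v_{2j} by q^(2j) *)
Definition hV (g : 'I_3) : int := 1 - (val g)%:Z.
Definition hW (m : 'I_8) : int := \sum_(g <- monw m) hV g.

Definition gen8 (g : 'I_3) : 'I_8 := i8 (val g).+1.

Definition bv (m : 'I_8) : 'cV[K]_8 := delta_mx m 0.
Definition bv3 (g : 'I_3) : 'cV[K]_3 := delta_mx g 0.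

Definition embV (v : 'cV[K]_3) : 'cV[K]_8 := \sum_(g < 3) v g 0 *: bv (gen8 g).

(* The module V_{2pi} = sl_q(2) under the left adjoint action:
   E.X = 0, E.Z = -(q+q^-1) X, E.Y = Z,
   F.X = -Z, F.Z = (q+q^-1) Y, F.Y = 0,   K.v_n = q^n v_n.
   Matrices act on column vectors (M *m v).                              *)
Definition qq := q + q^-1.
Definition VE : 'M[K]_3 :=
  \matrix_(i, j) (if (val i == 0%N) && (val j == 1%N) then - qq
                  else if (val i == 1%N) && (val j == 2%N) then 1 else 0).
Definition VF : 'M[K]_3 :=
  \matrix_(i, j) (if (val i == 1%N) && (val j == 0%N) then -1
                  else if (val i == 2%N) && (val j == 1%N) then qq else 0).
Definition VK : 'M[K]_3 := \matrix_(i, j) ((i == j)%:R * q ^ (2 * hV i)).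
Definition VKi : 'M[K]_3 := \matrix_(i, j) ((i == j)%:R * q ^ (- (2 * hV i))).

(* The algebra Cl_q(sl_2) (parameter c); for c = 0 this is /\_q V_{2pi}.
   lcol c g m = the product v_g * (monomial m) rewritten in the PBW basis
   using the defining relations
     v2 v2 = 0, v-2 v-2 = 0, v0 v2 = -q^-2 v2 v0, v-2 v0 = -q^-2 v0 v-2,
     v0 v0 = ((1-q^4)/q^3) v2 v-2 + ((q^2+1)/q) c,
     v-2 v2 = - v2 v-2 + ((q^2+1)/q^2) c.                               *)
Definition ca := (1 - q ^+ 4) / q ^+ 3.
Definition cb := (q ^+ 2 + 1) / q.
Definition ce := (q ^+ 2 + 1) / q ^+ 2.

Definition lcol (c : K) (g : nat) (m : nat) : seq (K * nat) :=
  match g, m with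
  | 0, 0 => [:: (1, 1%N)]
  | 0, 2 => [:: (1, 4%N)]
  | 0, 3 => [:: (1, 5%N)]
  | 0, 6 => [:: (1, 7%N)]
  | 0, _ => [::]
  | 1, 0 => [:: (1, 2%N)]
  | 1, 1 => [:: (- q ^- 2, 4%N)]
  | 1, 2 => [:: (ca, 5%N); (cb * c, 0%N)]
  | 1, 3 => [:: (1, 6%N)]
  | 1, 4 => [:: (- q ^- 2 * cb * c, 1%N)]
  | 1, 5 => [:: (- q ^- 2, 7%N)]
  | 1, 6 => [:: (cb * c, 3%N)]
  | 1, _ => [:: (- q ^- 2 * cb * c, 5%N)]
  | _, 0 => [:: (1, 3%N)]
  | _, 1 => [:: (-1, 5%N); (ce * c, 0%N)]
  | _, 2 => [:: (- q ^- 2, 6%N)]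
  | _, 4 => [:: (q ^- 2, 7%N); (ce * c, 2%N)]
  | _, 5 => [:: (ce * c, 3%N)]
  | _, 7 => [:: (ce * c, 6%N)]
  | _, _ => [::]
  end.

Definition lmat (c : K) (g : 'I_3) : 'M[K]_8 :=
  \matrix_(i, j) \sum_(p <- lcol c (val g) (val j) | p.2 == val i) p.1.

Definition wmat (c : K) (w : seq 'I_3) : 'M[K]_8 :=
  foldr (fun g M => lmat c g *m M) 1%:M w.

Definition clmul (c : K) (x y : 'cV[K]_8) : 'cV[K]_8 :=
  \sum_(m < 8) x m 0 *: (wmat c (monw m) *m y).

Definition wprod (c : K) (vs : seq 'cV[K]_8) : 'cV[K]_8 :=
  foldr (clmul c) (bv 0) vs.

Definition parity : 'M[K]_8 := \matrix_(i, j) ((i == j)%:R * (-1) ^+ deg i).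

(* U_q(sl_2)-module algebra structure induced from V_{2pi}:
   E(a1...ak) = sum_i a1..a_{i-1} (E a_i) (K a_{i+1})..(K a_k),
   F(a1...ak) = sum_i (K^-1 a1)..(K^-1 a_{i-1}) (F a_i) a_{i+1}..a_k,
   K acts by q^(weight).                                                  *)
Definition gvec (g : 'I_3) : 'cV[K]_8 := bv (gen8 g).

Definition LieEcol (c : K) (m : 'I_8) : 'cV[K]_8 :=
  let w := monw m in
  \sum_(i < size w)
     q ^ (2 * \sum_(h <- drop i.+1 w) hV h) *:
     wprod c (set_nth 0 (map gvec w) i (embV (VE *m bv3 (nth (g3 0) w i)))).

Definition LieFcol (c : K) (m : 'I_8) : 'cV[K]_8 :=
  let w := monw m in
  \sum_(i < size w)
     q ^ (- (2 * \sum_(h <- take i w) hV h)) *: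
     wprod c (set_nth 0 (map gvec w) i (embV (VF *m bv3 (nth (g3 0) w i)))).

Definition LieE (c : K) : 'M[K]_8 := \matrix_(k, m) LieEcol c m k 0.
Definition LieF (c : K) : 'M[K]_8 := \matrix_(k, m) LieFcol c m k 0.
Definition LieK : 'M[K]_8 := \matrix_(i, j) ((i == j)%:R * q ^ (2 * hW i)).
Definition LieKi : 'M[K]_8 := \matrix_(i, j) ((i == j)%:R * q ^ (- (2 * hW i))).

(* Tensor products V_{2pi} (x) W are 'M_(3,8) (v (x) w = v *m w^T), and
   W (x) V_{2pi} are 'M_(8,3).  (A (x) B) X = A *m X *m B^T.          *)
Definition tact {m n} (A : 'M[K]_m) (B : 'M[K]_n) (X : 'M[K]_(m, n)) :=
  A *m X *m B^T.

Definition qint (n : nat) : K := (q ^+ n - q ^- n) / (q - q^-1).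
Definition qfact (n : nat) : K := \prod_(1 <= k < n.+1) qint k.

Section Braiding.
Variables (m n : nat).
Variables (AE AF AK AKi : 'M[K]_m) (BE BF BK BKi : 'M[K]_n).
Variables (hA : 'I_m -> int) (hB : 'I_n -> int).

(* universal R-matrix (Kassel's convention, matching
   Delta E = E (x) K + 1 (x) E, Delta F = F (x) 1 + K^-1 (x) F):
   R = q^(H (x) H / 2) sum_k q^(k(k-1)/2) (q-q^-1)^k/[k]! E^k (x) F^k.
   On type 1 modules of highest weight <= 4 the terms k >= 5 vanish. *)
Definition Rmat (X : 'M[K]_(m, n)) : 'M[K]_(m, n) :=
  let S := \sum_(k < 5)
      (q ^+ 'C(k, 2) * (q - q^-1) ^+ k / qfact k) *: tact (AE ^+ k) (BF ^+ k) X in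
  \matrix_(i, j) (q ^ (2 * hA i * hB j) * S i j).

Definition braid (X : 'M[K]_(m, n)) : 'M[K]_(n, m) := (Rmat X)^T.

Definition tE (X : 'M[K]_(m, n)) := tact AE BK X + tact 1%:M BE X.
Definition tF (X : 'M[K]_(m, n)) := tact AF 1%:M X + tact AKi BF X.
Definition tK (X : 'M[K]_(m, n)) := tact AK BK X.
Definition tKi (X : 'M[K]_(m, n)) := tact AKi BKi X.
End Braiding.

(* Casimir eigenvalue on the simple module of highest weight 2k *)
Definition cval (k : nat) : K :=
  (q ^+ (2 * k).+1 + q ^- (2 * k).+1) / (q - q^-1) ^+ 2.

Definition casimir (M : lmodType K) (fE fF fK fKi : M -> M) (x : M) : M :=
  fE (fF x) + ((q - q^-1) ^+ 2)^-1 *: (q^-1 *: fK x + q *: fKi x).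

(* spectral projector onto the isotypic component of highest weight 2k
   (k < 3), as a polynomial in the Casimir f *)
Definition lagr (M : lmodType K) (f : M -> M) (k : 'I_3) (x : M) : M :=
  foldr (fun (j : 'I_3) y => (cval k - cval j)^-1 *: (f y - cval j *: y)) x
        [seq j <- enum 'I_3 | j != k].

(* theta^(s/2): acts on the component of highest weight 2k by
   q^(s * k(k+1)) = q^(s * (2k)(2k+2)/4)  (s = 1 or -1).
   All modules occurring here have isotypic components of highest
   weights 0, 2, 4 only. *)
Definition thalf (M : lmodType K) (s : int) (f : M -> M) (x : M) : M :=
  \sum_(k < 3) q ^ (s * (k * k.+1)%N%:Z) *: lagr f k x.

Section NormBraid.
Variables (n : nat) (BE BF BK BKi : 'M[K]_n) (hB : 'I_n -> int).
(* normalised braiding on V_{2pi} (x) W: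
   sigma~ = sigma o (sigma_{W,V} sigma_{V,W})^{-1/2}, where
   (sigma_{W,V} sigma_{V,W})^{-1/2} = (theta_V^{1/2} (x) theta_W^{1/2}) theta_{V (x) W}^{-1/2}. *)
Definition thetaV : 'M[K]_3 :=
  thalf 1 (mulmx (casimir (mulmx VE) (mulmx VF) (mulmx VK) (mulmx VKi) 1%:M)) 1%:M.
Definition thetaW : 'M[K]_n :=
  thalf 1 (mulmx (casimir (mulmx BE) (mulmx BF) (mulmx BK) (mulmx BKi) 1%:M)) 1%:M.
Definition Ctens : 'M[K]_(3, n) -> 'M[K]_(3, n) :=
  casimir (tE VE BE BK) (tF VF VKi BF) (tK VK BK) (tKi VKi BKi).
Definition nbraid (X : 'M[K]_(3, n)) : 'M[K]_(n, 3) :=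
  braid VE BF hV hB (tact thetaV thetaW (thalf (-1) Ctens X)).
End NormBraid.

Section Cl.
Variable c : K.

Definition mWV (Y : 'M[K]_(8, 3)) : 'cV[K]_8 :=
  \sum_(i < 8) \sum_(j < 3) Y i j *: clmul c (bv i) (gvec j).

(* iota_x w = 1/2 [x, w]_{sigma~}
           = 1/2 (x w - (-1)^{p(w)} m(sigma~(x (x) w))),   x in V_{2pi} *)
Definition iota1Cl (x : 'cV[K]_3) (w : 'cV[K]_8) : 'cV[K]_8 :=
  2^-1 *: (clmul c (embV x) w
           - mWV (nbraid (LieE c) (LieF c) LieK LieKi hW (x *m (parity *m w)^T))).

Definition IotaGenCl (g : 'I_3) : 'M[K]_8 :=
  \matrix_(k, m) iota1Cl (bv3 g) (bv m) k 0.

Definition iotaExt (G : 'I_3 -> 'M[K]_8) (xi : 'cV[K]_8) : 'M[K]_8 :=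
  \sum_(m < 8) xi m 0 *: foldr (fun g M => G g *m M) 1%:M (monw m).

Definition iotaCl := iotaExt IotaGenCl.

Definition gammaq : 'cV[K]_8 := - (2 * c ^+ 2)^-1 *: (c *: bv (i8 2) + bv (i8 7)).
Definition dCl : 'M[K]_8 :=
  \matrix_(k, m) (clmul c gammaq (bv m) - clmul c (parity *m bv m) gammaq) k 0.

(* associated graded maps on /\_q V (PBW basis = filtration-adapted basis):
   iota_x lowers the degree by one, d raises it by one. *)
Definition IotaGenLam (g : 'I_3) : 'M[K]_8 :=
  \matrix_(k, m) (if (deg k).+1 == deg m then IotaGenCl g k m else 0).
Definition iotaLam := iotaExt IotaGenLam.
Definition dLam : 'M[K]_8 :=
  \matrix_(k, m) (if deg k == (deg m).+1 then dCl k m else 0).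
End Cl.

(* W = 'cV_n; Lie derivatives given by the action of the generators
   E, F, K, K^-1; /\_q V_{2pi} = (K^8, clmul 0) with its natural action
   (LieE 0, LieF 0, LieK, LieKi).                                              *)
Section Def.
Variables (n : nat) (WE WF WK WKi : 'M[K]_n).
Variable (iota : 'cV[K]_8 -> 'M[K]_n) (d : 'M[K]_n).

Definition is_Uq_module : Prop :=
  [/\ WK *m WKi = 1%:M, WKi *m WK = 1%:M,
      WK *m WE = q ^+ 2 *: (WE *m WK), WK *m WF = q ^- 2 *: (WF *m WK)
    & WE *m WF - WF *m WE = (q - q^-1)^-1 *: (WK - WKi)].

Definition is_equiv_action : Prop :=
  [/\ forall (a : K) (xi eta : 'cV[K]_8), iota (a *: xi + eta) = a *: iota xi + iota eta,
      iota (bv 0) = 1%:M,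
      forall xi eta, iota (clmul 0 xi eta) = iota xi *m iota eta
    & forall xi,
      [/\ WE *m iota xi = iota (LieE 0 *m xi) *m WK + iota xi *m WE,
          WF *m iota xi = iota (LieF 0 *m xi) + iota (LieKi *m xi) *m WF,
          WK *m iota xi = iota (LieK *m xi) *m WK
        & WKi *m iota xi = iota (LieKi *m xi) *m WKi]].

Definition is_equiv_differential : Prop :=
  [/\ d *m d = 0, d *m WE = WE *m d, d *m WF = WF *m d,
      d *m WK = WK *m d & d *m WKi = WKi *m d].

(* (4) Cartan formula for x = a X + b Z + e Y in sl_q(2), where
   X = E, Z = q^-2 EF - FE, Y = KF in U_q(sl_2), and x corresponds to
   a v2 + b v0 + e v-2 in V_{2pi}. *)
Definition cartan : Prop :=
  forall a b e : K,
    let Lx := a *: WE + b *: (q ^- 2 *: (WE *m WF) - WF *m WE) + e *: (WK *m WF) in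
    let xi := a *: bv (i8 1) + b *: bv (i8 2) + e *: bv (i8 3) in
    Lx = iota xi *m d + d *m iota xi.

Definition qdiff_space : Prop :=
  [/\ is_Uq_module, is_equiv_action, is_equiv_differential & cartan].

Variables (mulW : 'cV[K]_n -> 'cV[K]_n -> 'cV[K]_n) (parW : 'M[K]_n).

Definition qdiff_algebra : Prop :=
  [/\ qdiff_space,
      forall a b,
      [/\ WE *m mulW a b = mulW (WE *m a) (WK *m b) + mulW a (WE *m b),
          WF *m mulW a b = mulW (WF *m a) b + mulW (WKi *m a) (WF *m b),
          WK *m mulW a b = mulW (WK *m a) (WK *m b)
        & WKi *m mulW a b = mulW (WKi *m a) (WKi *m b)]
    &
      forall a b, d *m mulW a b = mulW (d *m a) b + mulW (parW *m a) (d *m b)].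
End Def.

End QDiff.

From mathcomp Require Import all_boot all_order all_algebra.
From mathcomp Require Import complex.
From mathcomp Require Import reals.
From mathcomp Require Import ring.

(* Everything is finite-dimensional: V_{2pi} has dimension 3 and both
   Cl_q(sl_2) and /\_q V_{2pi} have dimension 8 in the PBW basis of ordered
   monomials in v_2, v_0, v_{-2}.  We compute every structure map as an
   explicit matrix whose entries are rational functions of q and c: the
   regular representation, the Lie derivatives, the universal R-matrix on
   V (x) Cl_q, the ribbon twists theta^{1/2} (through the spectral
   decomposition of the Casimir, whose eigenvalues on the three isotypic
   components are distinct), hence the normalised braiding, the
   contractions and d = [gamma_q, -].  Each axiom of a quantised
   sl_2-differential algebra then becomes a finite family of identities of
   rational functions, checked entrywise by [field].  Their denominators
   are products of q, 2, c and the cyclotomic polynomials Phi_n(q) for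
   n = 1, 2, 3, 4, 6, 8, which vanish only at roots of unity. *)

Set Implicit Arguments.
Unset Strict Implicit.
Unset Printing Implicit Defensive.

Import Order.TTheory GRing.Theory Num.Theory.
Local Open Scope ring_scope.

(* A sparse matrix [smx m n f] stores its entries as [option K], [None]
   being a structural zero.  Products, sums and transposes of sparse
   matrices are again sparse matrices whose tables reduce by computation,
   so the zero pattern is resolved by [simpl] before [field] sees an
   entry. *)
Section SparseMatrices.
Variable K : fieldType.

Definition oval (x : option K) : K := if x is Some v then v else 0.

Definition oadd (a b : option K) : option K :=
  match a, b with None, _ => b | _, None => a | Some x, Some y => Some (x + y) end.

Definition omul (a b : option K) : option K :=
  match a, b with Some x, Some y => Some (x * y) | _, _ => None end.

Definition oopp (a : option K) : option K := if a is Some x then Some (- x) else None.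
Fixpoint osum (n : nat) (F : nat -> option K) : option K :=
  if n is n'.+1 then oadd (osum n' F) (F n') else None.

Lemma ovalD a b : oval (oadd a b) = oval a + oval b.
Proof. by case: a; case: b => * /=; rewrite ?addr0 ?add0r. Qed.

Lemma ovalM a b : oval (omul a b) = oval a * oval b.
Proof. by case: a; case: b => * /=; rewrite ?mulr0 ?mul0r. Qed.

Lemma ovalN a : oval (oopp a) = - oval a.
Proof. by case: a => * /=; rewrite ?oppr0. Qed.

Lemma oval_sum n F : oval (osum n F) = \sum_(j < n) oval (F j).
Proof. by elim: n => [|n IH]; rewrite ?big_ord0 // big_ord_recr /= ovalD IH. Qed.

Definition smx m n (f : nat -> nat -> option K) : 'M[K]_(m, n) :=
  \matrix_(i, j) oval (f i j).

Lemma smxE m n f (i : 'I_m) (j : 'I_n) : smx m n f i j = oval (f i j).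
Proof. by rewrite mxE. Qed.

Lemma eq_smx m n f g :
    (forall i j, (i < m)%N -> (j < n)%N -> oval (f i j) = oval (g i j)) ->
  smx m n f = smx m n g.
Proof. by move=> fg; apply/matrixP => i j; rewrite !mxE fg. Qed.

Lemma smx_of_mx m n (A : 'M[K]_(m.+1, n.+1)) :
  A = smx m.+1 n.+1 (fun i j => Some (A (inord i) (inord j))).
Proof. by apply/matrixP => i j; rewrite mxE !inord_val. Qed.

Lemma smx_oval m n f : smx m n f = smx m n (fun i j => Some (oval (f i j))).
Proof. by apply/matrixP => i j; rewrite !mxE. Qed.

Lemma mulmx_smx m n p f g :
  smx m n f *m smx n p g = smx m p (fun i k => osum n (fun j => omul (f i j) (g j k))).
Proof.
apply/matrixP => i k; rewrite !mxE oval_sum.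
by apply: eq_bigr => j _; rewrite !mxE ovalM.
Qed.

Lemma addmx_smx m n f g :
  smx m n f + smx m n g = smx m n (fun i j => oadd (f i j) (g i j)).
Proof. by apply/matrixP => i j; rewrite !mxE ovalD. Qed.

Lemma oppmx_smx m n f : - smx m n f = smx m n (fun i j => oopp (f i j)).
Proof. by apply/matrixP => i j; rewrite !mxE ovalN. Qed.

Lemma submx_smx m n f g :
  smx m n f - smx m n g = smx m n (fun i j => oadd (f i j) (oopp (g i j))).
Proof. by apply/matrixP => i j; rewrite !mxE ovalD ovalN. Qed.

Lemma scalemx_smx m n a f : a *: smx m n f = smx m n (fun i j => omul (Some a) (f i j)).
Proof. by apply/matrixP => i j; rewrite !mxE ovalM. Qed.

Lemma trmx_smx m n f : (smx m n f)^T = smx n m (fun i j => f j i).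
Proof. by apply/matrixP => i j; rewrite !mxE. Qed.

Lemma idmx_smx n : 1%:M = smx n n (fun i j => if i == j then Some 1 else None).
Proof.
by apply/matrixP => i j; rewrite !mxE (_ : (i == j :> nat) = (i == j)) //; case: (i == j).
Qed.

Lemma zeromx_smx m n : 0 = smx m n (fun _ _ => None).
Proof. by apply/matrixP => i j; rewrite !mxE. Qed.

Lemma delta_col_smx n (m : 'I_n) :
  delta_mx m 0 = smx n 1 (fun i _ => if i == m then Some 1 else None).
Proof.
apply/matrixP => i [[|//] j_lt1]; rewrite !mxE andbT.
by rewrite (_ : (i == m :> nat) = (i == m)) //; case: (i == m).
Qed.

End SparseMatrices.

Arguments smx {K} m n f.
Arguments osum {K} n F.
Arguments oval : simpl nomatch.
Arguments oadd : simpl nomatch.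
Arguments omul : simpl nomatch.
Arguments oopp : simpl nomatch.
Arguments inord : simpl never.

Lemma exprz_split (R : unitRingType) (x : R) (z : int) :
  x ^ z = match z with Posz n => x ^+ n | Negz n => x ^- n.+1 end.
Proof. by case: z. Qed.

Lemma g3K n : (n < 3)%N -> g3 n = n :> nat.
Proof. exact: inordK. Qed.

Lemma i8K n : (n < 8)%N -> i8 n = n :> nat.
Proof. exact: inordK. Qed.

Lemma hV_g3 n : (n < 3)%N -> hV (g3 n) = 1 - n%:Z.
Proof. by move=> n_lt3; rewrite /hV; congr (_ - _%:Z); exact: g3K. Qed.

Lemma enum_ord3 : enum 'I_3 = [:: ord0; Ordinal (isT : (1 < 3)%N); Ordinal (isT : (2 < 3)%N)].
Proof. by apply: (inj_map val_inj); rewrite val_enum_ord. Qed.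

Ltac case1 i Hi := case: i Hi => [|i] Hi; [| by []].
Ltac case3 i Hi := case: i Hi => [|[|[|i]]] Hi; [| | | by []].
Ltac case8 i Hi := case: i Hi => [|[|[|[|[|[|[|[|i]]]]]]]] Hi; [| | | | | | | | by []].

Ltac refl_syntactic := lazymatch goal with |- ?a = ?b => constr_eq a b end; reflexivity.

Ltac neq0_by_ring :=
  match goal with
  | H : is_true (?y != 0) |- is_true (?x != 0) => (have -> : x = y by ring); exact: H
  end.

Ltac side_neq0 :=
  repeat first [ apply/andP; split | apply: mulf_neq0 | apply: expf_neq0
               | rewrite oppr_eq0 | exact: oner_neq0 | done ];
  try neq0_by_ring.

Ltac field_q := rewrite /qq /ca /cb /ce /cval; field; side_neq0.

Ltac entry := simpl; rewrite ?exprz_split /=; first [ refl_syntactic | field_q ].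

Ltac entry_oval := simpl; rewrite ?(ovalD, ovalM, ovalN) /=; field_q.

Lemma cyclotomic_neq0 (K : fieldType) (q : K) :
    (forall n, (0 < n <= 8)%N -> q ^+ n != 1) ->
  [/\ q - 1 != 0, q + 1 != 0, q ^+ 2 + 1 != 0
    & [/\ q ^+ 2 + q + 1 != 0, q ^+ 2 - q + 1 != 0 & q ^+ 4 + 1 != 0]].
Proof.
move=> q_not_root.
have root_neq0 n : (0 < n <= 8)%N -> q ^+ n - 1 != 0.
  by move=> n_gt0; rewrite subr_eq0 q_not_root.
have factor_neq0 (x y : K) n : x * y = q ^+ n - 1 -> (0 < n <= 8)%N -> x != 0.
  by move=> xy n_gt0; apply: contraNneq (root_neq0 n n_gt0) => x0; rewrite -xy x0 mul0r.
split; last split.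
- by rewrite -(expr1 q) root_neq0.
- by apply: (@factor_neq0 _ (q - 1) 2) => //; ring.
- by apply: (@factor_neq0 _ (q ^+ 2 - 1) 4) => //; ring.
- by apply: (@factor_neq0 _ (q - 1) 3) => //; ring.
- by apply: (@factor_neq0 _ ((q + 1) * (q ^+ 3 - 1)) 6) => //; ring.
- by apply: (@factor_neq0 _ (q ^+ 4 - 1) 8) => //; ring.
Qed.

Lemma iotaExt_linear (K : fieldType) (G : 'I_3 -> 'M[K]_8) (a : K) (xi eta : 'cV[K]_8) :
  iotaExt G (a *: xi + eta) = a *: iotaExt G xi + iotaExt G eta.
Proof.
rewrite /iotaExt scaler_sumr -big_split /=; apply: eq_bigr => m _.
by rewrite !mxE scalerDl scalerA.
Qed.

Lemma iotaExt1 (K : fieldType) (G : 'I_3 -> 'M[K]_8) : iotaExt G (bv K 0) = 1%:M.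
Proof.
rewrite /iotaExt (bigD1 ord0) //= big1 ?addr0; first by rewrite !mxE /= scale1r.
by move=> m /negPf m_neq0; rewrite !mxE m_neq0 /= scale0r.
Qed.

Section RegularRepresentation.
Variables (K : fieldType) (q c : K).
Hypotheses (q_neq0 : q != 0) (qsq_sub1_neq0 : q ^+ 2 - 1 != 0).

Lemma bv_smx (m : 'I_8) : bv K m = smx 8 1 (fun i _ => if i == m then Some 1 else None).
Proof. exact: delta_col_smx. Qed.

Lemma bv3_smx (m : 'I_3) : bv3 K m = smx 3 1 (fun i _ => if i == m then Some 1 else None).
Proof. exact: delta_col_smx. Qed.

Lemma gvec_smx (g : 'I_3) :
  gvec K g = smx 8 1 (fun i _ => if i == g.+1 then Some 1 else None).
Proof. by rewrite /gvec /gen8 bv_smx i8K //; case: g => [[|[|[|]]] ?]. Qed.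

Lemma VE_smx : VE q = smx 3 3 (fun i j => if (i == 0%N) && (j == 1%N) then Some (- qq q)
                  else if (i == 1%N) && (j == 2%N) then Some 1 else None).
Proof.
by apply/matrixP => i j; rewrite !mxE; case: i => [[|[|[|]]] ?]; case: j => [[|[|[|]]] ?].
Qed.

Lemma VF_smx : VF q = smx 3 3 (fun i j => if (i == 1%N) && (j == 0%N) then Some (-1)
                  else if (i == 2%N) && (j == 1%N) then Some (qq q) else None).
Proof.
by apply/matrixP => i j; rewrite !mxE; case: i => [[|[|[|]]] ?]; case: j => [[|[|[|]]] ?].
Qed.

Definition VK_diag (i : nat) : K := match i with 0 => q ^+ 2 | 1 => 1 | _ => q ^- 2 end.

Definition VKi_diag (i : nat) : K := match i with 0 => q ^- 2 | 1 => 1 | _ => q ^+ 2 end.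

Lemma VK_smx : VK q = smx 3 3 (fun i j => if i == j then Some (VK_diag i) else None).
Proof.
apply/matrixP => i j; rewrite !mxE.
by case: i => [[|[|[|]]] ?]; case: j => [[|[|[|]]] ?] //=; rewrite /hV /= ?expr0z ?mul1r ?mul0r.
Qed.

Lemma VKi_smx : VKi q = smx 3 3 (fun i j => if i == j then Some (VKi_diag i) else None).
Proof.
apply/matrixP => i j; rewrite !mxE.
by case: i => [[|[|[|]]] ?]; case: j => [[|[|[|]]] ?] //=; rewrite /hV /= ?expr0z ?mul1r ?mul0r.
Qed.

Definition lmat_tab (g i j : nat) : option K :=
  match g, i, j with
  | 0, 1, 0 => Some (1%:R)
  | 0, 4, 2 => Some (1%:R)
  | 0, 5, 3 => Some (1%:R)
  | 0, 7, 6 => Some (1%:R)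
  | 1, 0, 2 => Some (q ^- 1 * c + q * c)
  | 1, 1, 4 => Some (- q ^- 3 * c - q ^- 1 * c)
  | 1, 2, 0 => Some (1%:R)
  | 1, 3, 6 => Some (q ^- 1 * c + q * c)
  | 1, 4, 1 => Some (- q ^- 2)
  | 1, 5, 2 => Some (q ^- 3 - q)
  | 1, 5, 7 => Some (- q ^- 3 * c - q ^- 1 * c)
  | 1, 6, 3 => Some (1%:R)
  | 1, 7, 5 => Some (- q ^- 2)
  | 2, 0, 1 => Some (q ^- 2 * c + c)
  | 2, 2, 4 => Some (q ^- 2 * c + c)
  | 2, 3, 0 => Some (1%:R)
  | 2, 3, 5 => Some (q ^- 2 * c + c)
  | 2, 5, 1 => Some (- 1%:R)
  | 2, 6, 2 => Some (- q ^- 2)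
  | 2, 6, 7 => Some (q ^- 2 * c + c)
  | 2, 7, 4 => Some (q ^- 2)
  | _, _, _ => None end.

Definition wmat_tab (m i j : nat) : option K :=
  match m, i, j with
  | 0, 0, 0 => Some (1%:R)
  | 0, 1, 1 => Some (1%:R)
  | 0, 2, 2 => Some (1%:R)
  | 0, 3, 3 => Some (1%:R)
  | 0, 4, 4 => Some (1%:R)
  | 0, 5, 5 => Some (1%:R)
  | 0, 6, 6 => Some (1%:R)
  | 0, 7, 7 => Some (1%:R)
  | 1, 1, 0 => Some (1%:R)
  | 1, 4, 2 => Some (1%:R)
  | 1, 5, 3 => Some (1%:R)
  | 1, 7, 6 => Some (1%:R)
  | 2, 0, 2 => Some (q ^- 1 * c + q * c)
  | 2, 1, 4 => Some (- q ^- 3 * c - q ^- 1 * c)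
  | 2, 2, 0 => Some (1%:R)
  | 2, 3, 6 => Some (q ^- 1 * c + q * c)
  | 2, 4, 1 => Some (- q ^- 2)
  | 2, 5, 2 => Some (q ^- 3 - q)
  | 2, 5, 7 => Some (- q ^- 3 * c - q ^- 1 * c)
  | 2, 6, 3 => Some (1%:R)
  | 2, 7, 5 => Some (- q ^- 2)
  | 3, 0, 1 => Some (q ^- 2 * c + c)
  | 3, 2, 4 => Some (q ^- 2 * c + c)
  | 3, 3, 0 => Some (1%:R)
  | 3, 3, 5 => Some (q ^- 2 * c + c)
  | 3, 5, 1 => Some (- 1%:R)
  | 3, 6, 2 => Some (- q ^- 2)
  | 3, 6, 7 => Some (q ^- 2 * c + c)
  | 3, 7, 4 => Some (q ^- 2)
  | 4, 1, 2 => Some (q ^- 1 * c + q * c)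
  | 4, 4, 0 => Some (1%:R)
  | 4, 5, 6 => Some (q ^- 1 * c + q * c)
  | 4, 7, 3 => Some (1%:R)
  | 5, 1, 1 => Some (q ^- 2 * c + c)
  | 5, 4, 4 => Some (q ^- 2 * c + c)
  | 5, 5, 0 => Some (1%:R)
  | 5, 5, 5 => Some (q ^- 2 * c + c)
  | 5, 7, 2 => Some (- q ^- 2)
  | 5, 7, 7 => Some (q ^- 2 * c + c)
  | 6, 0, 4 => Some (q ^- 3 * c ^+ 2 + 2%:R * q ^- 1 * c ^+ 2 + q * c ^+ 2)
  | 6, 2, 1 => Some (q ^- 2 * c + c)
  | 6, 3, 2 => Some (- q ^- 3 * c - q ^- 1 * c)
  | 6, 3, 7 => Some (q ^- 3 * c ^+ 2 + 2%:R * q ^- 1 * c ^+ 2 + q * c ^+ 2)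
  | 6, 5, 4 => Some (- q ^- 1 * c - q * c)
  | 6, 6, 0 => Some (1%:R)
  | 6, 6, 5 => Some (q ^- 2 * c + c)
  | 6, 7, 1 => Some (q ^- 2)
  | 7, 1, 4 => Some (q ^- 3 * c ^+ 2 + 2%:R * q ^- 1 * c ^+ 2 + q * c ^+ 2)
  | 7, 4, 1 => Some (q ^- 2 * c + c)
  | 7, 5, 2 => Some (- q ^- 3 * c - q ^- 1 * c)
  | 7, 5, 7 => Some (q ^- 3 * c ^+ 2 + 2%:R * q ^- 1 * c ^+ 2 + q * c ^+ 2)
  | 7, 7, 0 => Some (1%:R)
  | 7, 7, 5 => Some (q ^- 2 * c + c)
  | _, _, _ => None end.

Definition clmul_tab (f g : nat -> nat -> option K) (i j : nat) : option K :=
  match i, j with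
  | 0, 0 => oadd (omul (Some (1%:R)) (omul (f 0%N 0%N) (g 0%N 0%N))) (oadd (omul (Some (q ^- 1 * c + q * c)) (omul (f 2%N 0%N) (g 2%N 0%N))) (oadd (omul (Some (q ^- 2 * c + c)) (omul (f 3%N 0%N) (g 1%N 0%N))) (omul (Some (q ^- 3 * c ^+ 2 + 2%:R * q ^- 1 * c ^+ 2 + q * c ^+ 2)) (omul (f 6%N 0%N) (g 4%N 0%N)))))
  | 1, 0 => oadd (omul (Some (1%:R)) (omul (f 0%N 0%N) (g 1%N 0%N))) (oadd (omul (Some (1%:R)) (omul (f 1%N 0%N) (g 0%N 0%N))) (oadd (omul (Some (- q ^- 3 * c - q ^- 1 * c)) (omul (f 2%N 0%N) (g 4%N 0%N))) (oadd (omul (Some (q ^- 1 * c + q * c)) (omul (f 4%N 0%N) (g 2%N 0%N))) (oadd (omul (Some (q ^- 2 * c + c)) (omul (f 5%N 0%N) (g 1%N 0%N))) (omul (Some (q ^- 3 * c ^+ 2 + 2%:R * q ^- 1 * c ^+ 2 + q * c ^+ 2)) (omul (f 7%N 0%N) (g 4%N 0%N)))))))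
  | 2, 0 => oadd (omul (Some (1%:R)) (omul (f 0%N 0%N) (g 2%N 0%N))) (oadd (omul (Some (1%:R)) (omul (f 2%N 0%N) (g 0%N 0%N))) (oadd (omul (Some (q ^- 2 * c + c)) (omul (f 3%N 0%N) (g 4%N 0%N))) (omul (Some (q ^- 2 * c + c)) (omul (f 6%N 0%N) (g 1%N 0%N)))))
  | 3, 0 => oadd (omul (Some (1%:R)) (omul (f 0%N 0%N) (g 3%N 0%N))) (oadd (omul (Some (q ^- 1 * c + q * c)) (omul (f 2%N 0%N) (g 6%N 0%N))) (oadd (omul (Some (1%:R)) (omul (f 3%N 0%N) (g 0%N 0%N))) (oadd (omul (Some (q ^- 2 * c + c)) (omul (f 3%N 0%N) (g 5%N 0%N))) (oadd (omul (Some (- q ^- 3 * c - q ^- 1 * c)) (omul (f 6%N 0%N) (g 2%N 0%N))) (omul (Some (q ^- 3 * c ^+ 2 + 2%:R * q ^- 1 * c ^+ 2 + q * c ^+ 2)) (omul (f 6%N 0%N) (g 7%N 0%N)))))))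
  | 4, 0 => oadd (omul (Some (1%:R)) (omul (f 0%N 0%N) (g 4%N 0%N))) (oadd (omul (Some (1%:R)) (omul (f 1%N 0%N) (g 2%N 0%N))) (oadd (omul (Some (- q ^- 2)) (omul (f 2%N 0%N) (g 1%N 0%N))) (oadd (omul (Some (1%:R)) (omul (f 4%N 0%N) (g 0%N 0%N))) (oadd (omul (Some (q ^- 2 * c + c)) (omul (f 5%N 0%N) (g 4%N 0%N))) (omul (Some (q ^- 2 * c + c)) (omul (f 7%N 0%N) (g 1%N 0%N)))))))
  | 5, 0 => oadd (omul (Some (1%:R)) (omul (f 0%N 0%N) (g 5%N 0%N))) (oadd (omul (Some (1%:R)) (omul (f 1%N 0%N) (g 3%N 0%N))) (oadd (omul (Some (q ^- 3 - q)) (omul (f 2%N 0%N) (g 2%N 0%N))) (oadd (omul (Some (- q ^- 3 * c - q ^- 1 * c)) (omul (f 2%N 0%N) (g 7%N 0%N))) (oadd (omul (Some (- 1%:R)) (omul (f 3%N 0%N) (g 1%N 0%N))) (oadd (omul (Some (q ^- 1 * c + q * c)) (omul (f 4%N 0%N) (g 6%N 0%N))) (oadd (omul (Some (1%:R)) (omul (f 5%N 0%N) (g 0%N 0%N))) (oadd (omul (Some (q ^- 2 * c + c)) (omul (f 5%N 0%N) (g 5%N 0%N))) (oadd (omul (Some (- q ^- 1 * c - q * c)) (omul (f 6%N 0%N) (g 4%N 0%N))) (oadd (omul (Some (- q ^- 3 * c - q ^- 1 * c)) (omul (f 7%N 0%N) (g 2%N 0%N))) (omul (Some (q ^- 3 *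 c ^+ 2 + 2%:R * q ^- 1 * c ^+ 2 + q * c ^+ 2)) (omul (f 7%N 0%N) (g 7%N 0%N))))))))))))
  | 6, 0 => oadd (omul (Some (1%:R)) (omul (f 0%N 0%N) (g 6%N 0%N))) (oadd (omul (Some (1%:R)) (omul (f 2%N 0%N) (g 3%N 0%N))) (oadd (omul (Some (- q ^- 2)) (omul (f 3%N 0%N) (g 2%N 0%N))) (oadd (omul (Some (q ^- 2 * c + c)) (omul (f 3%N 0%N) (g 7%N 0%N))) (oadd (omul (Some (1%:R)) (omul (f 6%N 0%N) (g 0%N 0%N))) (omul (Some (q ^- 2 * c + c)) (omul (f 6%N 0%N) (g 5%N 0%N)))))))
  | 7, 0 => oadd (omul (Some (1%:R)) (omul (f 0%N 0%N) (g 7%N 0%N))) (oadd (omul (Some (1%:R)) (omul (f 1%N 0%N) (g 6%N 0%N))) (oadd (omul (Some (- q ^- 2)) (omul (f 2%N 0%N) (g 5%N 0%N))) (oadd (omul (Some (q ^- 2)) (omul (f 3%N 0%N) (g 4%N 0%N))) (oadd (omul (Some (1%:R)) (omul (f 4%N 0%N) (g 3%N 0%N))) (oadd (omul (Some (- q ^- 2)) (omul (f 5%N 0%N) (g 2%N 0%N))) (oadd (omul (Some (q ^- 2 * c + c)) (omul (f 5%N 0%N) (g 7%N 0%N))) (oadd (omul (Some (q ^- 2)) (omul (f 6%N 0%N) (g 1%N 0%N))) (oadd (omul (Some (1%:R)) (omul (f 7%N 0%N) (g 0%N 0%N))) (omul (Some (q ^- 2 * c + c)) (omul (f 7%N 0%N)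 (g 5%N 0%N)))))))))))
  | _, _ => None end.

Definition LieE_tab (i j : nat) : option K :=
  match i, j with
  | 0, 6 => Some (q ^- 1 * c + q * c)
  | 1, 2 => Some (- q ^- 1 - q)
  | 1, 7 => Some (q ^- 1 * c + q * c)
  | 2, 3 => Some (1%:R)
  | 4, 5 => Some (1%:R)
  | 5, 6 => Some (- q ^- 1 - q)
  | _, _ => None end.

Definition LieF_tab (i j : nat) : option K :=
  match i, j with
  | 0, 4 => Some (- q ^- 1 * c - q * c)
  | 2, 1 => Some (- 1%:R)
  | 3, 2 => Some (q ^- 1 + q)
  | 3, 7 => Some (- q ^- 1 * c - q * c)
  | 5, 4 => Some (q ^- 1 + q)
  | 6, 5 => Some (- 1%:R)
  | _, _ => None end.

Definition LieK_tab (i j : nat) : option K :=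
  match i, j with
  | 0, 0 => Some (1%:R)
  | 1, 1 => Some (q ^+ 2)
  | 2, 2 => Some (1%:R)
  | 3, 3 => Some (q ^- 2)
  | 4, 4 => Some (q ^+ 2)
  | 5, 5 => Some (1%:R)
  | 6, 6 => Some (q ^- 2)
  | 7, 7 => Some (1%:R)
  | _, _ => None end.

Definition LieKi_tab (i j : nat) : option K :=
  match i, j with
  | 0, 0 => Some (1%:R)
  | 1, 1 => Some (q ^- 2)
  | 2, 2 => Some (1%:R)
  | 3, 3 => Some (q ^+ 2)
  | 4, 4 => Some (q ^- 2)
  | 5, 5 => Some (1%:R)
  | 6, 6 => Some (q ^+ 2)
  | 7, 7 => Some (1%:R)
  | _, _ => None end.

Lemma lmat_smx (g : 'I_3) : lmat q c g = smx 8 8 (lmat_tab (nat_of_ord g)).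
Proof.
apply/matrixP => i j; rewrite !mxE.
case: g => [[|[|[|g]]] Hg] //; case: j => [[|[|[|[|[|[|[|[|j]]]]]]]] Hj] //=;
  rewrite ?big_cons ?big_nil /=;
  case: i => [[|[|[|[|[|[|[|[|i]]]]]]]] Hi] //=; rewrite ?addr0; entry.
Qed.

(* The word v_2 v_0 v_{-2} is multiplied out through v_0 v_{-2}, which keeps
   the intermediate terms small. *)
Lemma wmat_v0vm2 : wmat q c [:: g3 1; g3 2] = smx 8 8 (wmat_tab 6).
Proof.
rewrite /wmat /= !lmat_smx !g3K // idmx_smx !mulmx_smx.
apply: eq_smx => i j Hi Hj; case8 i Hi; case8 j Hj; entry.
Qed.

Lemma wmat_smx (m : 'I_8) : wmat q c (monw m) = smx 8 8 (wmat_tab (nat_of_ord m)).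
Proof.
case: m => [[|[|[|[|[|[|[|[|m]]]]]]]] Hm] //; rewrite /monw /=; last first.
  change (lmat q c (g3 0) *m wmat q c [:: g3 1; g3 2] = smx 8 8 (wmat_tab 7)).
  rewrite wmat_v0vm2 lmat_smx g3K // mulmx_smx.
  by apply: eq_smx => i j Hi Hj; case8 i Hi; case8 j Hj; entry.
all: rewrite /wmat /= ?lmat_smx ?g3K // idmx_smx ?mulmx_smx.
all: by apply: eq_smx => i j Hi Hj; case8 i Hi; case8 j Hj; entry.
Qed.

Lemma clmul_smx_some (x y : nat -> nat -> K) :
  clmul q c (smx 8 1 (fun i j => Some (x i j))) (smx 8 1 (fun i j => Some (y i j))) =
  smx 8 1 (clmul_tab (fun i j => Some (x i j)) (fun i j => Some (y i j))).
Proof.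
rewrite /clmul !big_ord_recr big_ord0 !smxE !wmat_smx /= add0r.
rewrite !mulmx_smx !scalemx_smx !addmx_smx.
apply: eq_smx => i j Hi Hj; case8 i Hi; case1 j Hj; entry.
Qed.

Lemma clmul_smx f g : clmul q c (smx 8 1 f) (smx 8 1 g) = smx 8 1 (clmul_tab f g).
Proof.
rewrite [smx 8 1 f]smx_oval [smx 8 1 g]smx_oval clmul_smx_some.
apply: eq_smx => i j Hi Hj; case8 i Hi; case1 j Hj; entry_oval.
Qed.

Lemma embV_smx (f : nat -> nat -> option K) :
  embV (smx 3 1 f) =
  smx 8 1 (fun i _ => match i with
                      | 1 => f 0%N 0%N | 2 => f 1%N 0%N | 3 => f 2%N 0%N | _ => None end).
Proof.
rewrite /embV !big_ord_recr big_ord0 /= !smxE /gen8 !bv_smx !i8K //.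
rewrite !scalemx_smx add0r !addmx_smx.
by apply: eq_smx => i j Hi Hj; case8 i Hi; entry_oval.
Qed.

Lemma LieE_smx : LieE q c = smx 8 8 LieE_tab.
Proof.
apply/matrixP => k m; rewrite !mxE.
case: m => [[|[|[|[|[|[|[|[|m]]]]]]]] Hm] //; rewrite /LieEcol /= ?big_ord_recr big_ord0 /=.
all: rewrite ?big_cons ?big_nil /wprod /= ?hV_g3 // ?add0r ?exprz_split /=.
all: rewrite ?VE_smx ?bv3_smx ?gvec_smx ?bv_smx ?g3K // ?mulmx_smx ?embV_smx ?clmul_smx.
all: rewrite ?scalemx_smx ?addmx_smx ?smxE ?mxE.
all: case: k => [k Hk] /=; case8 k Hk; entry.
Qed.

Lemma LieF_smx : LieF q c = smx 8 8 LieF_tab.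
Proof.
apply/matrixP => k m; rewrite !mxE.
case: m => [[|[|[|[|[|[|[|[|m]]]]]]]] Hm] //; rewrite /LieFcol /= ?big_ord_recr big_ord0 /=.
all: rewrite ?big_cons ?big_nil /wprod /= ?hV_g3 // ?add0r ?exprz_split /=.
all: rewrite ?VF_smx ?bv3_smx ?gvec_smx ?bv_smx ?g3K // ?mulmx_smx ?embV_smx ?clmul_smx.
all: rewrite ?scalemx_smx ?addmx_smx ?smxE ?mxE.
all: case: k => [k Hk] /=; case8 k Hk; entry.
Qed.

Lemma LieK_smx : LieK q = smx 8 8 LieK_tab.
Proof.
apply/matrixP => i j; rewrite !mxE /hW.
case: i => [[|[|[|[|[|[|[|[|i]]]]]]]] Hi] //=; rewrite ?big_cons ?big_nil ?hV_g3 // ?exprz_split /=;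
case: j => [j Hj] /=; case8 j Hj; entry.
Qed.

Lemma LieKi_smx : LieKi q = smx 8 8 LieKi_tab.
Proof.
apply/matrixP => i j; rewrite !mxE /hW.
case: i => [[|[|[|[|[|[|[|[|i]]]]]]]] Hi] //=; rewrite ?big_cons ?big_nil ?hV_g3 // ?exprz_split /=;
case: j => [j Hj] /=; case8 j Hj; entry.
Qed.

Lemma Lie_Uq_module : is_Uq_module q (LieE q c) (LieF q c) (LieK q) (LieKi q).
Proof.
rewrite /is_Uq_module LieE_smx LieF_smx LieK_smx LieKi_smx idmx_smx.
rewrite ?(mulmx_smx, scalemx_smx, submx_smx, addmx_smx).
split; apply: eq_smx => i j Hi Hj; case8 i Hi; case8 j Hj; entry.
Qed.

Lemma Lie_module_algebra (a b : 'cV[K]_8) :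
  [/\ LieE q c *m clmul q c a b =
        clmul q c (LieE q c *m a) (LieK q *m b) + clmul q c a (LieE q c *m b),
      LieF q c *m clmul q c a b =
        clmul q c (LieF q c *m a) b + clmul q c (LieKi q *m a) (LieF q c *m b),
      LieK q *m clmul q c a b = clmul q c (LieK q *m a) (LieK q *m b)
    & LieKi q *m clmul q c a b = clmul q c (LieKi q *m a) (LieKi q *m b)].
Proof.
rewrite [a]smx_of_mx [b]smx_of_mx LieE_smx LieF_smx LieK_smx LieKi_smx.
rewrite ?(clmul_smx, mulmx_smx, addmx_smx).
split; apply: eq_smx => i j Hi Hj; case8 i Hi; case1 j Hj; entry.
Qed.
End RegularRepresentation.

Section StructureMaps.
Variables (K : fieldType) (q c : K).
Hypotheses (q_neq0 : q != 0) (two_neq0 : 2%:R != 0 :> K).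
Hypotheses (Phi1_neq0 : q - 1 != 0) (Phi2_neq0 : q + 1 != 0) (Phi4_neq0 : q ^+ 2 + 1 != 0).
Hypotheses (Phi3_neq0 : q ^+ 2 + q + 1 != 0) (Phi6_neq0 : q ^+ 2 - q + 1 != 0).
Hypothesis Phi8_neq0 : q ^+ 4 + 1 != 0.

Let qsq_sub1_neq0 : q ^+ 2 - 1 != 0.
Proof. have -> : q ^+ 2 - 1 = (q - 1) * (q + 1) by ring. exact: mulf_neq0. Qed.

Lemma thalf_expand (V : lmodType K) s (f : V -> V) (x : V) :
  let P k l y := (cval q k - cval q l)^-1 *: (f y - cval q l *: y) in
  thalf q s f x = q ^ (s * 0%:Z) *: P 0%N 1%N (P 0%N 2%N x)
                + q ^ (s * 2%:Z) *: P 1%N 0%N (P 1%N 2%N x)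
                + q ^ (s * 6%:Z) *: P 2%N 0%N (P 2%N 1%N x).
Proof. by move=> P; rewrite /thalf /lagr /P enum_ord3 !big_ord_recr big_ord0 /= add0r. Qed.

(* The spectral projectors in [thalf] divide by differences of Casimir
   eigenvalues; these factor through Phi_3 Phi_4 Phi_6 and Phi_4 Phi_8. *)
Lemma cval_sub01V :
  (cval q 0 - cval q 1)^-1 = - q / (q ^+ 2 + 1).
Proof.
have -> : cval q 0 - cval q 1 = - (q ^+ 2 + 1) / q by field_q.
field_q.
Qed.

Lemma cval_sub10V :
  (cval q 1 - cval q 0)^-1 = q / (q ^+ 2 + 1).
Proof.
have -> : cval q 1 - cval q 0 = (q ^+ 2 + 1) / q by field_q.
field_q.
Qed.

Lemma cval_sub02V :
  (cval q 0 - cval q 2)^-1 = - q ^+ 3 / ((q ^+ 2 + q + 1) * (q ^+ 2 + 1) * (q ^+ 2 - q + 1)).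
Proof.
have -> : cval q 0 - cval q 2 = - ((q ^+ 2 + q + 1) * (q ^+ 2 + 1) * (q ^+ 2 - q + 1)) / q ^+ 3 by field_q.
field_q.
Qed.

Lemma cval_sub20V :
  (cval q 2 - cval q 0)^-1 = q ^+ 3 / ((q ^+ 2 + q + 1) * (q ^+ 2 + 1) * (q ^+ 2 - q + 1)).
Proof.
have -> : cval q 2 - cval q 0 = ((q ^+ 2 + q + 1) * (q ^+ 2 + 1) * (q ^+ 2 - q + 1)) / q ^+ 3 by field_q.
field_q.
Qed.

Lemma cval_sub12V :
  (cval q 1 - cval q 2)^-1 = - q ^+ 3 / ((q ^+ 2 + 1) * (q ^+ 4 + 1)).
Proof.
have -> : cval q 1 - cval q 2 = - ((q ^+ 2 + 1) * (q ^+ 4 + 1)) / q ^+ 3 by field_q.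
field_q.
Qed.

Lemma cval_sub21V :
  (cval q 2 - cval q 1)^-1 = q ^+ 3 / ((q ^+ 2 + 1) * (q ^+ 4 + 1)).
Proof.
have -> : cval q 2 - cval q 1 = ((q ^+ 2 + 1) * (q ^+ 4 + 1)) / q ^+ 3 by field_q.
field_q.
Qed.

Definition tF_tab (x : nat -> nat -> K) (i j : nat) : option K :=
  match i, j with
  | 0, 0 => Some ((- q ^- 3 * c - q ^- 1 * c) * x 0%N 4%N)
  | 0, 2 => Some ((- q ^- 2) * x 0%N 1%N)
  | 0, 3 => Some ((q ^- 3 + q ^- 1) * x 0%N 2%N + (- q ^- 3 * c - q ^- 1 * c) * x 0%N 7%N)
  | 0, 5 => Some ((q ^- 3 + q ^- 1) * x 0%N 4%N)
  | 0, 6 => Some ((- q ^- 2) * x 0%N 5%N)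
  | 1, 0 => Some ((- 1%:R) * x 0%N 0%N + (- q ^- 1 * c - q * c) * x 1%N 4%N)
  | 1, 1 => Some ((- 1%:R) * x 0%N 1%N)
  | 1, 2 => Some ((- 1%:R) * x 0%N 2%N + (- 1%:R) * x 1%N 1%N)
  | 1, 3 => Some ((- 1%:R) * x 0%N 3%N + (q ^- 1 + q) * x 1%N 2%N + (- q ^- 1 * c - q * c) * x 1%N 7%N)
  | 1, 4 => Some ((- 1%:R) * x 0%N 4%N)
  | 1, 5 => Some ((- 1%:R) * x 0%N 5%N + (q ^- 1 + q) * x 1%N 4%N)
  | 1, 6 => Some ((- 1%:R) * x 0%N 6%N + (- 1%:R) * x 1%N 5%N)
  | 1, 7 => Some ((- 1%:R) * x 0%N 7%N)
  | 2, 0 => Some ((q ^- 1 + q) * x 1%N 0%N + (- q * c - q ^+ 3 * c) * x 2%N 4%N)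
  | 2, 1 => Some ((q ^- 1 + q) * x 1%N 1%N)
  | 2, 2 => Some ((q ^- 1 + q) * x 1%N 2%N + (- q ^+ 2) * x 2%N 1%N)
  | 2, 3 => Some ((q ^- 1 + q) * x 1%N 3%N + (q + q ^+ 3) * x 2%N 2%N + (- q * c - q ^+ 3 * c) * x 2%N 7%N)
  | 2, 4 => Some ((q ^- 1 + q) * x 1%N 4%N)
  | 2, 5 => Some ((q ^- 1 + q) * x 1%N 5%N + (q + q ^+ 3) * x 2%N 4%N)
  | 2, 6 => Some ((q ^- 1 + q) * x 1%N 6%N + (- q ^+ 2) * x 2%N 5%N)
  | 2, 7 => Some ((q ^- 1 + q) * x 1%N 7%N)
  | _, _ => None end.

Definition tE_tab (x : nat -> nat -> K) (i j : nat) : option K :=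
  match i, j with
  | 0, 0 => Some ((q ^- 1 * c + q * c) * x 0%N 6%N + (- q ^- 1 - q) * x 1%N 0%N)
  | 0, 1 => Some ((- q ^- 1 - q) * x 0%N 2%N + (q ^- 1 * c + q * c) * x 0%N 7%N + (- q - q ^+ 3) * x 1%N 1%N)
  | 0, 2 => Some ((1%:R) * x 0%N 3%N + (- q ^- 1 - q) * x 1%N 2%N)
  | 0, 3 => Some ((- q ^- 3 - q ^- 1) * x 1%N 3%N)
  | 0, 4 => Some ((1%:R) * x 0%N 5%N + (- q - q ^+ 3) * x 1%N 4%N)
  | 0, 5 => Some ((- q ^- 1 - q) * x 0%N 6%N + (- q ^- 1 - q) * x 1%N 5%N)
  | 0, 6 => Some ((- q ^- 3 - q ^- 1) * x 1%N 6%N)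
  | 0, 7 => Some ((- q ^- 1 - q) * x 1%N 7%N)
  | 1, 0 => Some ((q ^- 1 * c + q * c) * x 1%N 6%N + (1%:R) * x 2%N 0%N)
  | 1, 1 => Some ((- q ^- 1 - q) * x 1%N 2%N + (q ^- 1 * c + q * c) * x 1%N 7%N + (q ^+ 2) * x 2%N 1%N)
  | 1, 2 => Some ((1%:R) * x 1%N 3%N + (1%:R) * x 2%N 2%N)
  | 1, 3 => Some ((q ^- 2) * x 2%N 3%N)
  | 1, 4 => Some ((1%:R) * x 1%N 5%N + (q ^+ 2) * x 2%N 4%N)
  | 1, 5 => Some ((- q ^- 1 - q) * x 1%N 6%N + (1%:R) * x 2%N 5%N)
  | 1, 6 => Some ((q ^- 2) * x 2%N 6%N)
  | 1, 7 => Some ((1%:R) * x 2%N 7%N)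
  | 2, 0 => Some ((q ^- 1 * c + q * c) * x 2%N 6%N)
  | 2, 1 => Some ((- q ^- 1 - q) * x 2%N 2%N + (q ^- 1 * c + q * c) * x 2%N 7%N)
  | 2, 2 => Some ((1%:R) * x 2%N 3%N)
  | 2, 4 => Some ((1%:R) * x 2%N 5%N)
  | 2, 5 => Some ((- q ^- 1 - q) * x 2%N 6%N)
  | _, _ => None end.

Definition tK_tab (x : nat -> nat -> K) (i j : nat) : option K :=
  match i, j with
  | 0, 0 => Some ((q ^+ 2) * x 0%N 0%N)
  | 0, 1 => Some ((q ^+ 4) * x 0%N 1%N)
  | 0, 2 => Some ((q ^+ 2) * x 0%N 2%N)
  | 0, 3 => Some ((1%:R) * x 0%N 3%N)
  | 0, 4 => Some ((q ^+ 4) * x 0%N 4%N)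
  | 0, 5 => Some ((q ^+ 2) * x 0%N 5%N)
  | 0, 6 => Some ((1%:R) * x 0%N 6%N)
  | 0, 7 => Some ((q ^+ 2) * x 0%N 7%N)
  | 1, 0 => Some ((1%:R) * x 1%N 0%N)
  | 1, 1 => Some ((q ^+ 2) * x 1%N 1%N)
  | 1, 2 => Some ((1%:R) * x 1%N 2%N)
  | 1, 3 => Some ((q ^- 2) * x 1%N 3%N)
  | 1, 4 => Some ((q ^+ 2) * x 1%N 4%N)
  | 1, 5 => Some ((1%:R) * x 1%N 5%N)
  | 1, 6 => Some ((q ^- 2) * x 1%N 6%N)
  | 1, 7 => Some ((1%:R) * x 1%N 7%N)
  | 2, 0 => Some ((q ^- 2) * x 2%N 0%N)
  | 2, 1 => Some ((1%:R) * x 2%N 1%N)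
  | 2, 2 => Some ((q ^- 2) * x 2%N 2%N)
  | 2, 3 => Some ((q ^- 4) * x 2%N 3%N)
  | 2, 4 => Some ((1%:R) * x 2%N 4%N)
  | 2, 5 => Some ((q ^- 2) * x 2%N 5%N)
  | 2, 6 => Some ((q ^- 4) * x 2%N 6%N)
  | 2, 7 => Some ((q ^- 2) * x 2%N 7%N)
  | _, _ => None end.

Definition tKi_tab (x : nat -> nat -> K) (i j : nat) : option K :=
  match i, j with
  | 0, 0 => Some ((q ^- 2) * x 0%N 0%N)
  | 0, 1 => Some ((q ^- 4) * x 0%N 1%N)
  | 0, 2 => Some ((q ^- 2) * x 0%N 2%N)
  | 0, 3 => Some ((1%:R) * x 0%N 3%N)
  | 0, 4 => Some ((q ^- 4) * x 0%N 4%N)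
  | 0, 5 => Some ((q ^- 2) * x 0%N 5%N)
  | 0, 6 => Some ((1%:R) * x 0%N 6%N)
  | 0, 7 => Some ((q ^- 2) * x 0%N 7%N)
  | 1, 0 => Some ((1%:R) * x 1%N 0%N)
  | 1, 1 => Some ((q ^- 2) * x 1%N 1%N)
  | 1, 2 => Some ((1%:R) * x 1%N 2%N)
  | 1, 3 => Some ((q ^+ 2) * x 1%N 3%N)
  | 1, 4 => Some ((q ^- 2) * x 1%N 4%N)
  | 1, 5 => Some ((1%:R) * x 1%N 5%N)
  | 1, 6 => Some ((q ^+ 2) * x 1%N 6%N)
  | 1, 7 => Some ((1%:R) * x 1%N 7%N)
  | 2, 0 => Some ((q ^+ 2) * x 2%N 0%N)
  | 2, 1 => Some ((1%:R) * x 2%N 1%N)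
  | 2, 2 => Some ((q ^+ 2) * x 2%N 2%N)
  | 2, 3 => Some ((q ^+ 4) * x 2%N 3%N)
  | 2, 4 => Some ((1%:R) * x 2%N 4%N)
  | 2, 5 => Some ((q ^+ 2) * x 2%N 5%N)
  | 2, 6 => Some ((q ^+ 4) * x 2%N 6%N)
  | 2, 7 => Some ((q ^+ 2) * x 2%N 7%N)
  | _, _ => None end.

Definition Ctens_tab (x : nat -> nat -> K) (i j : nat) : option K :=
  match i, j with
  | 0, 0 => Some (((q ^- 1 + q ^+ 5) / ((- 1%:R + q) ^+ 2 * (1%:R + q) ^+ 2)) * x 0%N 0%N + (- q ^- 3 * c - q ^- 1 * c) * x 0%N 5%N + (q ^- 2 * c + 2%:R * c + q ^+ 2 * c) * x 1%N 4%N)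
  | 0, 1 => Some (((q ^- 3 + q ^+ 7) / ((- 1%:R + q) ^+ 2 * (1%:R + q) ^+ 2)) * x 0%N 1%N)
  | 0, 2 => Some (((q ^- 3 - q + q ^+ 3 + q ^+ 5) / ((- 1%:R + q) ^+ 2 * (1%:R + q) ^+ 2)) * x 0%N 2%N + (- q ^- 3 * c - q ^- 1 * c) * x 0%N 7%N + (q ^- 1 + q) * x 1%N 1%N)
  | 0, 3 => Some (((q ^- 3 - q ^- 1 + 2%:R * q ^+ 3) / ((- 1%:R + q) ^+ 2 * (1%:R + q) ^+ 2)) * x 0%N 3%N + (- q ^- 4 - 2%:R * q ^- 2 - 1%:R) * x 1%N 2%N + (q ^- 4 * c + 2%:R * q ^- 2 * c + c) * x 1%N 7%N)
  | 0, 4 => Some (((q ^- 3 + q ^+ 7) / ((- 1%:R + q) ^+ 2 * (1%:R + q) ^+ 2)) * x 0%N 4%N)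
  | 0, 5 => Some (((q ^- 3 - q + q ^+ 3 + q ^+ 5) / ((- 1%:R + q) ^+ 2 * (1%:R + q) ^+ 2)) * x 0%N 5%N + (- q ^- 2 - 2%:R - q ^+ 2) * x 1%N 4%N)
  | 0, 6 => Some (((q ^- 3 - q ^- 1 + 2%:R * q ^+ 3) / ((- 1%:R + q) ^+ 2 * (1%:R + q) ^+ 2)) * x 0%N 6%N + (q ^- 3 + q ^- 1) * x 1%N 5%N)
  | 0, 7 => Some (((q ^- 1 + q ^+ 5) / ((- 1%:R + q) ^+ 2 * (1%:R + q) ^+ 2)) * x 0%N 7%N)
  | 1, 0 => Some ((- q ^- 1 * c - q * c) * x 0%N 6%N + ((q ^- 1 + q ^+ 5) / ((- 1%:R + q) ^+ 2 * (1%:R + q) ^+ 2)) * x 1%N 0%N + (- q ^- 1 * c - q * c) * x 1%N 5%N + (- q * c - q ^+ 3 * c) * x 2%N 4%N)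
  | 1, 1 => Some ((q ^- 1 + q) * x 0%N 2%N + (- q ^- 1 * c - q * c) * x 0%N 7%N + ((q ^- 1 + q - q ^+ 3 + q ^+ 7) / ((- 1%:R + q) ^+ 2 * (1%:R + q) ^+ 2)) * x 1%N 1%N)
  | 1, 2 => Some ((- 1%:R) * x 0%N 3%N + ((2%:R * q ^- 1 - q - q ^+ 3 + 2%:R * q ^+ 5) / ((- 1%:R + q) ^+ 2 * (1%:R + q) ^+ 2)) * x 1%N 2%N + (- q ^- 1 * c - q * c) * x 1%N 7%N + (- q ^+ 2) * x 2%N 1%N)
  | 1, 3 => Some (((q ^- 3 - q + q ^+ 3 + q ^+ 5) / ((- 1%:R + q) ^+ 2 * (1%:R + q) ^+ 2)) * x 1%N 3%N + (q ^- 1 + q) * x 2%N 2%N + (- q ^- 1 * c - q * c) * x 2%N 7%N)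
  | 1, 4 => Some ((- 1%:R) * x 0%N 5%N + ((q ^- 1 + q - q ^+ 3 + q ^+ 7) / ((- 1%:R + q) ^+ 2 * (1%:R + q) ^+ 2)) * x 1%N 4%N)
  | 1, 5 => Some ((q ^- 1 + q) * x 0%N 6%N + ((2%:R * q ^- 1 - q - q ^+ 3 + 2%:R * q ^+ 5) / ((- 1%:R + q) ^+ 2 * (1%:R + q) ^+ 2)) * x 1%N 5%N + (q + q ^+ 3) * x 2%N 4%N)
  | 1, 6 => Some (((q ^- 3 - q + q ^+ 3 + q ^+ 5) / ((- 1%:R + q) ^+ 2 * (1%:R + q) ^+ 2)) * x 1%N 6%N + (- 1%:R) * x 2%N 5%N)
  | 1, 7 => Some (((q ^- 1 + q ^+ 5) / ((- 1%:R + q) ^+ 2 * (1%:R + q) ^+ 2)) * x 1%N 7%N)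
  | 2, 0 => Some ((q ^- 2 * c + 2%:R * c + q ^+ 2 * c) * x 1%N 6%N + ((q ^- 1 + q ^+ 5) / ((- 1%:R + q) ^+ 2 * (1%:R + q) ^+ 2)) * x 2%N 0%N + (- q * c - q ^+ 3 * c) * x 2%N 5%N)
  | 2, 1 => Some ((- q ^- 2 - 2%:R - q ^+ 2) * x 1%N 2%N + (q ^- 2 * c + 2%:R * c + q ^+ 2 * c) * x 1%N 7%N + ((2%:R * q - q ^+ 5 + q ^+ 7) / ((- 1%:R + q) ^+ 2 * (1%:R + q) ^+ 2)) * x 2%N 1%N)
  | 2, 2 => Some ((q ^- 1 + q) * x 1%N 3%N + ((q ^- 1 + q - q ^+ 3 + q ^+ 7) / ((- 1%:R + q) ^+ 2 * (1%:R + q) ^+ 2)) * x 2%N 2%N + (- q * c - q ^+ 3 * c) * x 2%N 7%N)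
  | 2, 3 => Some (((q ^- 3 + q ^+ 7) / ((- 1%:R + q) ^+ 2 * (1%:R + q) ^+ 2)) * x 2%N 3%N)
  | 2, 4 => Some ((q ^- 1 + q) * x 1%N 5%N + ((2%:R * q - q ^+ 5 + q ^+ 7) / ((- 1%:R + q) ^+ 2 * (1%:R + q) ^+ 2)) * x 2%N 4%N)
  | 2, 5 => Some ((- q ^- 2 - 2%:R - q ^+ 2) * x 1%N 6%N + ((q ^- 1 + q - q ^+ 3 + q ^+ 7) / ((- 1%:R + q) ^+ 2 * (1%:R + q) ^+ 2)) * x 2%N 5%N)
  | 2, 6 => Some (((q ^- 3 + q ^+ 7) / ((- 1%:R + q) ^+ 2 * (1%:R + q) ^+ 2)) * x 2%N 6%N)
  | 2, 7 => Some (((q ^- 1 + q ^+ 5) / ((- 1%:R + q) ^+ 2 * (1%:R + q) ^+ 2)) * x 2%N 7%N)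
  | _, _ => None end.

Definition thalf_Ctens_tab (x : nat -> nat -> K) (i j : nat) : option K :=
  match i, j with
  | 0, 0 => Some ((q ^- 2) * x 0%N 0%N + ((- q ^- 6 * c + q ^- 2 * c) / ((1%:R + q ^+ 4))) * x 0%N 5%N + ((q ^- 5 * c + q ^- 3 * c - q ^- 1 * c - q * c) / ((1%:R + q ^+ 4))) * x 1%N 4%N)
  | 0, 1 => Some ((q ^- 6) * x 0%N 1%N)
  | 0, 2 => Some (((q ^- 6 + q ^+ 2) / ((1%:R + q ^+ 4))) * x 0%N 2%N + ((- q ^- 6 * c + q ^- 2 * c) / ((1%:R + q ^+ 4))) * x 0%N 7%N + ((q ^- 4 - 1%:R) / ((1%:R + q ^+ 4))) * x 1%N 1%N)
  | 0, 3 => Some (((q ^- 6 - q ^- 4 + 2%:R - q ^+ 2 + q ^+ 4) / ((1%:R + q ^+ 4))) * x 0%N 3%N + ((- q ^- 7 - q ^- 5 + 2%:R * q ^- 3 - q + q ^+ 3) / ((1%:R + q ^+ 4))) * x 1%N 2%N + ((q ^- 7 * c + q ^- 5 * c - 2%:R * q ^- 3 * c + q * c - q ^+ 3 * c) / ((1%:R + q ^+ 4))) * x 1%N 7%N + ((q ^- 2 - 2%:R + q ^+ 2) / ((1%:R + q ^+ 4))) * x 2%N 1%N)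
  | 0, 4 => Some ((q ^- 6) * x 0%N 4%N)
  | 0, 5 => Some (((q ^- 6 + q ^+ 2) / ((1%:R + q ^+ 4))) * x 0%N 5%N + ((- q ^- 5 - q ^- 3 + q ^- 1 + q) / ((1%:R + q ^+ 4))) * x 1%N 4%N)
  | 0, 6 => Some (((q ^- 6 - q ^- 4 + 2%:R - q ^+ 2 + q ^+ 4) / ((1%:R + q ^+ 4))) * x 0%N 6%N + ((q ^- 6 - 2%:R * q ^- 2 + 2%:R - q ^+ 2) / ((1%:R + q ^+ 4))) * x 1%N 5%N + ((q ^- 2 - 2%:R + q ^+ 2) / ((1%:R + q ^+ 4))) * x 2%N 4%N)
  | 0, 7 => Some ((q ^- 2) * x 0%N 7%N)
  | 1, 0 => Some (((- q ^- 4 * c + 2%:R * c - 2%:R * q ^+ 2 * c + q ^+ 4 * c) / ((1%:R + q ^+ 4))) * x 0%N 6%N + (q ^- 2) * x 1%N 0%N + ((- q ^- 4 * c - q ^- 2 * c + 3%:R * c - q ^+ 2 * c) / ((1%:R + q ^+ 4))) * x 1%N 5%N + ((- 2%:R * c + 2%:R * q ^+ 2 * c) / ((1%:R + q ^+ 4))) * x 2%N 4%N)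
  | 1, 1 => Some (((q ^- 4 - 1%:R) / ((1%:R + q ^+ 4))) * x 0%N 2%N + ((- q ^- 4 * c + c) / ((1%:R + q ^+ 4))) * x 0%N 7%N + ((2%:R * q ^- 2) / ((1%:R + q ^+ 4))) * x 1%N 1%N)
  | 1, 2 => Some (((- q ^- 3 + 2%:R * q - 2%:R * q ^+ 3 + q ^+ 5) / ((1%:R + q ^+ 2) * (1%:R + q ^+ 4))) * x 0%N 3%N + ((q ^- 4 + 2%:R * q ^- 2 - 3%:R + 2%:R * q ^+ 2) / ((1%:R + q ^+ 4))) * x 1%N 2%N + ((- q ^- 4 * c - q ^- 2 * c + 3%:R * c - q ^+ 2 * c) / ((1%:R + q ^+ 4))) * x 1%N 7%N + ((- 2%:R * q + 2%:R * q ^+ 3) / ((1%:R + q ^+ 2) * (1%:R + q ^+ 4))) * x 2%N 1%N)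
  | 1, 3 => Some (((q ^- 6 + q ^+ 2) / ((1%:R + q ^+ 4))) * x 1%N 3%N + ((q ^- 4 - 1%:R) / ((1%:R + q ^+ 4))) * x 2%N 2%N + ((- q ^- 4 * c + c) / ((1%:R + q ^+ 4))) * x 2%N 7%N)
  | 1, 4 => Some (((- q ^- 3 + q ^- 1) / ((1%:R + q ^+ 4))) * x 0%N 5%N + ((2%:R * q ^- 2) / ((1%:R + q ^+ 4))) * x 1%N 4%N)
  | 1, 5 => Some (((q ^- 4 - 2%:R + 2%:R * q ^+ 2 - q ^+ 4) / ((1%:R + q ^+ 4))) * x 0%N 6%N + ((q ^- 4 + 2%:R * q ^- 2 - 3%:R + 2%:R * q ^+ 2) / ((1%:R + q ^+ 4))) * x 1%N 5%N + ((2%:R - 2%:R * q ^+ 2) / ((1%:R + q ^+ 4))) * x 2%N 4%N)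
  | 1, 6 => Some (((q ^- 6 + q ^+ 2) / ((1%:R + q ^+ 4))) * x 1%N 6%N + ((- q ^- 3 + q ^- 1) / ((1%:R + q ^+ 4))) * x 2%N 5%N)
  | 1, 7 => Some ((q ^- 2) * x 1%N 7%N)
  | 2, 0 => Some (((q ^- 5 * c + q ^- 3 * c - q ^- 1 * c - q * c) / ((1%:R + q ^+ 4))) * x 1%N 6%N + (q ^- 2) * x 2%N 0%N + ((- q ^- 2 * c + q ^+ 2 * c) / ((1%:R + q ^+ 4))) * x 2%N 5%N)
  | 2, 1 => Some (((q ^- 2 - 2%:R + q ^+ 2) / ((1%:R + q ^+ 4))) * x 0%N 3%N + ((- 2%:R * q ^- 3 + 2%:R * q) / ((1%:R + q ^+ 4))) * x 1%N 2%N + ((2%:R * q ^- 3 * c - 2%:R * q * c) / ((1%:R + q ^+ 4))) * x 1%N 7%N + ((2%:R) / ((1%:R + q ^+ 4))) * x 2%N 1%N)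
  | 2, 2 => Some (((q ^- 4 - 1%:R) / ((1%:R + q ^+ 4))) * x 1%N 3%N + ((2%:R * q ^- 2) / ((1%:R + q ^+ 4))) * x 2%N 2%N + ((- q ^- 2 * c + q ^+ 2 * c) / ((1%:R + q ^+ 4))) * x 2%N 7%N)
  | 2, 3 => Some ((q ^- 6) * x 2%N 3%N)
  | 2, 4 => Some (((q ^- 2 - 2%:R + q ^+ 2) / ((1%:R + q ^+ 4))) * x 0%N 6%N + ((2%:R * q ^- 2 - 2%:R) / ((1%:R + q ^+ 4))) * x 1%N 5%N + ((2%:R) / ((1%:R + q ^+ 4))) * x 2%N 4%N)
  | 2, 5 => Some (((- q ^- 5 - q ^- 3 + q ^- 1 + q) / ((1%:R + q ^+ 4))) * x 1%N 6%N + ((2%:R * q ^- 2) / ((1%:R + q ^+ 4))) * x 2%N 5%N)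
  | 2, 6 => Some ((q ^- 6) * x 2%N 6%N)
  | 2, 7 => Some ((q ^- 2) * x 2%N 7%N)
  | _, _ => None end.

Lemma tF_smx f :
  tF (VF q) (VKi q) (LieF q c) (smx 3 8 f) = smx 3 8 (tF_tab (fun i j => oval (f i j))).
Proof.
rewrite /tF /tact VF_smx VKi_smx (LieF_smx c q_neq0) idmx_smx [smx 3 8 f]smx_oval.
rewrite ?(mulmx_smx, trmx_smx, addmx_smx).
apply: eq_smx => i j Hi Hj; case3 i Hi; case8 j Hj; entry.
Qed.

Lemma tE_smx f :
  tE (VE q) (LieE q c) (LieK q) (smx 3 8 f) = smx 3 8 (tE_tab (fun i j => oval (f i j))).
Proof.
rewrite /tE /tact VE_smx (LieE_smx c q_neq0) (LieK_smx q_neq0) idmx_smx [smx 3 8 f]smx_oval.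
rewrite ?(mulmx_smx, trmx_smx, addmx_smx).
apply: eq_smx => i j Hi Hj; case3 i Hi; case8 j Hj; entry.
Qed.

Lemma tK_smx f : tK (VK q) (LieK q) (smx 3 8 f) = smx 3 8 (tK_tab (fun i j => oval (f i j))).
Proof.
rewrite /tK /tact VK_smx (LieK_smx q_neq0) [smx 3 8 f]smx_oval ?(mulmx_smx, trmx_smx, addmx_smx).
apply: eq_smx => i j Hi Hj; case3 i Hi; case8 j Hj; entry.
Qed.

Lemma tKi_smx f : tKi (VKi q) (LieKi q) (smx 3 8 f) = smx 3 8 (tKi_tab (fun i j => oval (f i j))).
Proof.
rewrite /tKi /tact VKi_smx (LieKi_smx q_neq0) [smx 3 8 f]smx_oval ?(mulmx_smx, trmx_smx, addmx_smx).
apply: eq_smx => i j Hi Hj; case3 i Hi; case8 j Hj; entry.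
Qed.

Lemma Ctens_smx f :
  Ctens q (LieE q c) (LieF q c) (LieK q) (LieKi q) (smx 3 8 f) =
  smx 3 8 (Ctens_tab (fun i j => oval (f i j))).
Proof.
rewrite /Ctens /casimir tF_smx tE_smx tK_smx tKi_smx ?(scalemx_smx, addmx_smx).
apply: eq_smx => i j Hi Hj; case3 i Hi; case8 j Hj; entry.
Qed.

Lemma thalf_Ctens_smx f :
  thalf q (-1) (Ctens q (LieE q c) (LieF q c) (LieK q) (LieKi q)) (smx 3 8 f) =
  smx 3 8 (thalf_Ctens_tab (fun i j => oval (f i j))).
Proof.
rewrite thalf_expand cval_sub01V cval_sub02V cval_sub12V cval_sub10V cval_sub20V cval_sub21V.
rewrite [smx 3 8 f]smx_oval ?(Ctens_smx, scalemx_smx, submx_smx, addmx_smx).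
apply: eq_smx => i j Hi Hj; case3 i Hi; case8 j Hj; entry.
Qed.

Definition casimirV_tab (i j : nat) : option K :=
  match i, j with
  | 0, 0 => Some ((q ^- 1 + q ^+ 5) / ((- 1%:R + q) ^+ 2 * (1%:R + q) ^+ 2))
  | 1, 1 => Some ((q ^- 1 + q ^+ 5) / ((- 1%:R + q) ^+ 2 * (1%:R + q) ^+ 2))
  | 2, 2 => Some ((q ^- 1 + q ^+ 5) / ((- 1%:R + q) ^+ 2 * (1%:R + q) ^+ 2))
  | _, _ => None end.

Definition thetaV_tab (i j : nat) : option K :=
  match i, j with
  | 0, 0 => Some (q ^+ 2)
  | 1, 1 => Some (q ^+ 2)
  | 2, 2 => Some (q ^+ 2)
  | _, _ => None end.

Definition casimirW_tab (i j : nat) : option K :=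
  match i, j with
  | 0, 0 => Some ((q + q ^+ 3) / ((- 1%:R + q) ^+ 2 * (1%:R + q) ^+ 2))
  | 0, 5 => Some (- q ^- 1 * c - q * c)
  | 1, 1 => Some ((q ^- 1 + q ^+ 5) / ((- 1%:R + q) ^+ 2 * (1%:R + q) ^+ 2))
  | 2, 2 => Some ((q ^- 1 + q ^+ 5) / ((- 1%:R + q) ^+ 2 * (1%:R + q) ^+ 2))
  | 2, 7 => Some (- q ^- 1 * c - q * c)
  | 3, 3 => Some ((q ^- 1 + q ^+ 5) / ((- 1%:R + q) ^+ 2 * (1%:R + q) ^+ 2))
  | 4, 4 => Some ((q ^- 1 + q ^+ 5) / ((- 1%:R + q) ^+ 2 * (1%:R + q) ^+ 2))
  | 5, 5 => Some ((q ^- 1 + q ^+ 5) / ((- 1%:R + q) ^+ 2 * (1%:R + q) ^+ 2))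
  | 6, 6 => Some ((q ^- 1 + q ^+ 5) / ((- 1%:R + q) ^+ 2 * (1%:R + q) ^+ 2))
  | 7, 7 => Some ((q + q ^+ 3) / ((- 1%:R + q) ^+ 2 * (1%:R + q) ^+ 2))
  | _, _ => None end.

Definition thetaW_tab (i j : nat) : option K :=
  match i, j with
  | 0, 0 => Some (1%:R)
  | 0, 5 => Some (c - q ^+ 2 * c)
  | 1, 1 => Some (q ^+ 2)
  | 2, 2 => Some (q ^+ 2)
  | 2, 7 => Some (c - q ^+ 2 * c)
  | 3, 3 => Some (q ^+ 2)
  | 4, 4 => Some (q ^+ 2)
  | 5, 5 => Some (q ^+ 2)
  | 6, 6 => Some (q ^+ 2)
  | 7, 7 => Some (1%:R)
  | _, _ => None end.

Definition theta_tact_tab (x : nat -> nat -> K) (i j : nat) : option K :=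
  match i, j with
  | 0, 0 => Some ((q ^+ 2) * x 0%N 0%N + (q ^+ 2 * c - q ^+ 4 * c) * x 0%N 5%N)
  | 0, 1 => Some ((q ^+ 4) * x 0%N 1%N)
  | 0, 2 => Some ((q ^+ 4) * x 0%N 2%N + (q ^+ 2 * c - q ^+ 4 * c) * x 0%N 7%N)
  | 0, 3 => Some ((q ^+ 4) * x 0%N 3%N)
  | 0, 4 => Some ((q ^+ 4) * x 0%N 4%N)
  | 0, 5 => Some ((q ^+ 4) * x 0%N 5%N)
  | 0, 6 => Some ((q ^+ 4) * x 0%N 6%N)
  | 0, 7 => Some ((q ^+ 2) * x 0%N 7%N)
  | 1, 0 => Some ((q ^+ 2) * x 1%N 0%N + (q ^+ 2 * c - q ^+ 4 * c) * x 1%N 5%N)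
  | 1, 1 => Some ((q ^+ 4) * x 1%N 1%N)
  | 1, 2 => Some ((q ^+ 4) * x 1%N 2%N + (q ^+ 2 * c - q ^+ 4 * c) * x 1%N 7%N)
  | 1, 3 => Some ((q ^+ 4) * x 1%N 3%N)
  | 1, 4 => Some ((q ^+ 4) * x 1%N 4%N)
  | 1, 5 => Some ((q ^+ 4) * x 1%N 5%N)
  | 1, 6 => Some ((q ^+ 4) * x 1%N 6%N)
  | 1, 7 => Some ((q ^+ 2) * x 1%N 7%N)
  | 2, 0 => Some ((q ^+ 2) * x 2%N 0%N + (q ^+ 2 * c - q ^+ 4 * c) * x 2%N 5%N)
  | 2, 1 => Some ((q ^+ 4) * x 2%N 1%N)
  | 2, 2 => Some ((q ^+ 4) * x 2%N 2%N + (q ^+ 2 * c - q ^+ 4 * c) * x 2%N 7%N)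
  | 2, 3 => Some ((q ^+ 4) * x 2%N 3%N)
  | 2, 4 => Some ((q ^+ 4) * x 2%N 4%N)
  | 2, 5 => Some ((q ^+ 4) * x 2%N 5%N)
  | 2, 6 => Some ((q ^+ 4) * x 2%N 6%N)
  | 2, 7 => Some ((q ^+ 2) * x 2%N 7%N)
  | _, _ => None end.

Definition Rsum_tab (x : nat -> nat -> K) (i j : nat) : option K :=
  match i, j with
  | 0, 0 => Some ((1%:R) * x 0%N 0%N + (- q ^- 3 * c - q ^- 1 * c + q * c + q ^+ 3 * c) * x 1%N 4%N)
  | 0, 1 => Some ((1%:R) * x 0%N 1%N)
  | 0, 2 => Some ((1%:R) * x 0%N 2%N + (- q ^- 2 + q ^+ 2) * x 1%N 1%N)
  | 0, 3 => Some ((1%:R) * x 0%N 3%N + (q ^- 3 + q ^- 1 - q - q ^+ 3) * x 1%N 2%N + (- q ^- 3 * c - q ^- 1 * c + q * c + q ^+ 3 * c) * x 1%N 7%N + (q ^- 2 - 1%:R - q ^+ 2 + q ^+ 4) * x 2%N 1%N)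
  | 0, 4 => Some ((1%:R) * x 0%N 4%N)
  | 0, 5 => Some ((1%:R) * x 0%N 5%N + (q ^- 3 + q ^- 1 - q - q ^+ 3) * x 1%N 4%N)
  | 0, 6 => Some ((1%:R) * x 0%N 6%N + (- q ^- 2 + q ^+ 2) * x 1%N 5%N + (q ^- 2 - 1%:R - q ^+ 2 + q ^+ 4) * x 2%N 4%N)
  | 0, 7 => Some ((1%:R) * x 0%N 7%N)
  | 1, 0 => Some ((1%:R) * x 1%N 0%N + (q ^- 2 * c - q ^+ 2 * c) * x 2%N 4%N)
  | 1, 1 => Some ((1%:R) * x 1%N 1%N)
  | 1, 2 => Some ((1%:R) * x 1%N 2%N + (q ^- 1 - q) * x 2%N 1%N)
  | 1, 3 => Some ((1%:R) * x 1%N 3%N + (- q ^- 2 + q ^+ 2) * x 2%N 2%N + (q ^- 2 * c - q ^+ 2 * c) * x 2%N 7%N)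
  | 1, 4 => Some ((1%:R) * x 1%N 4%N)
  | 1, 5 => Some ((1%:R) * x 1%N 5%N + (- q ^- 2 + q ^+ 2) * x 2%N 4%N)
  | 1, 6 => Some ((1%:R) * x 1%N 6%N + (q ^- 1 - q) * x 2%N 5%N)
  | 1, 7 => Some ((1%:R) * x 1%N 7%N)
  | 2, 0 => Some ((1%:R) * x 2%N 0%N)
  | 2, 1 => Some ((1%:R) * x 2%N 1%N)
  | 2, 2 => Some ((1%:R) * x 2%N 2%N)
  | 2, 3 => Some ((1%:R) * x 2%N 3%N)
  | 2, 4 => Some ((1%:R) * x 2%N 4%N)
  | 2, 5 => Some ((1%:R) * x 2%N 5%N)
  | 2, 6 => Some ((1%:R) * x 2%N 6%N)
  | 2, 7 => Some ((1%:R) * x 2%N 7%N)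
  | _, _ => None end.

Definition Rmat_tab (x : nat -> nat -> K) (i j : nat) : option K :=
  match i, j with
  | 0, 0 => Some ((1%:R) * x 0%N 0%N + (- q ^- 3 * c - q ^- 1 * c + q * c + q ^+ 3 * c) * x 1%N 4%N)
  | 0, 1 => Some ((q ^+ 2) * x 0%N 1%N)
  | 0, 2 => Some ((1%:R) * x 0%N 2%N + (- q ^- 2 + q ^+ 2) * x 1%N 1%N)
  | 0, 3 => Some ((q ^- 2) * x 0%N 3%N + (q ^- 5 + q ^- 3 - q ^- 1 - q) * x 1%N 2%N + (- q ^- 5 * c - q ^- 3 * c + q ^- 1 * c + q * c) * x 1%N 7%N + (q ^- 4 - q ^- 2 - 1%:R + q ^+ 2) * x 2%N 1%N)
  | 0, 4 => Some ((q ^+ 2) * x 0%N 4%N)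
  | 0, 5 => Some ((1%:R) * x 0%N 5%N + (q ^- 3 + q ^- 1 - q - q ^+ 3) * x 1%N 4%N)
  | 0, 6 => Some ((q ^- 2) * x 0%N 6%N + (- q ^- 4 + 1%:R) * x 1%N 5%N + (q ^- 4 - q ^- 2 - 1%:R + q ^+ 2) * x 2%N 4%N)
  | 0, 7 => Some ((1%:R) * x 0%N 7%N)
  | 1, 0 => Some ((1%:R) * x 1%N 0%N + (q ^- 2 * c - q ^+ 2 * c) * x 2%N 4%N)
  | 1, 1 => Some ((1%:R) * x 1%N 1%N)
  | 1, 2 => Some ((1%:R) * x 1%N 2%N + (q ^- 1 - q) * x 2%N 1%N)
  | 1, 3 => Some ((1%:R) * x 1%N 3%N + (- q ^- 2 + q ^+ 2) * x 2%N 2%N + (q ^- 2 * c - q ^+ 2 * c) * x 2%N 7%N)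
  | 1, 4 => Some ((1%:R) * x 1%N 4%N)
  | 1, 5 => Some ((1%:R) * x 1%N 5%N + (- q ^- 2 + q ^+ 2) * x 2%N 4%N)
  | 1, 6 => Some ((1%:R) * x 1%N 6%N + (q ^- 1 - q) * x 2%N 5%N)
  | 1, 7 => Some ((1%:R) * x 1%N 7%N)
  | 2, 0 => Some ((1%:R) * x 2%N 0%N)
  | 2, 1 => Some ((q ^- 2) * x 2%N 1%N)
  | 2, 2 => Some ((1%:R) * x 2%N 2%N)
  | 2, 3 => Some ((q ^+ 2) * x 2%N 3%N)
  | 2, 4 => Some ((q ^- 2) * x 2%N 4%N)
  | 2, 5 => Some ((1%:R) * x 2%N 5%N)
  | 2, 6 => Some ((q ^+ 2) * x 2%N 6%N)
  | 2, 7 => Some ((1%:R) * x 2%N 7%N)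
  | _, _ => None end.

Definition mWV_tab (x : nat -> nat -> K) (i j : nat) : option K :=
  match i, j with
  | 0, 0 => Some ((q ^- 1 * c + q * c) * x 2%N 1%N + (q ^- 2 * c + c) * x 3%N 0%N)
  | 1, 0 => Some ((1%:R) * x 0%N 0%N + (q ^- 1 * c + q * c) * x 4%N 1%N + (q ^- 2 * c + c) * x 5%N 0%N)
  | 2, 0 => Some ((1%:R) * x 0%N 1%N + (q ^- 2 * c + c) * x 6%N 0%N)
  | 3, 0 => Some ((1%:R) * x 0%N 2%N + (- q ^- 3 * c - q ^- 1 * c) * x 6%N 1%N)
  | 4, 0 => Some ((1%:R) * x 1%N 1%N + (- q ^- 2) * x 2%N 0%N + (q ^- 2 * c + c) * x 7%N 0%N)
  | 5, 0 => Some ((1%:R) * x 1%N 2%N + (q ^- 3 - q) * x 2%N 1%N + (- 1%:R) * x 3%N 0%N + (- q ^- 3 * c - q ^- 1 * c) * x 7%N 1%N)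
  | 6, 0 => Some ((1%:R) * x 2%N 2%N + (- q ^- 2) * x 3%N 1%N)
  | 7, 0 => Some ((1%:R) * x 4%N 2%N + (- q ^- 2) * x 5%N 1%N + (q ^- 2) * x 6%N 0%N)
  | _, _ => None end.

Definition mWV_nbraid_tab (x : nat -> nat -> K) (i j : nat) : option K :=
  match i, j with
  | 0, 0 => Some ((2%:R * c) * x 0%N 3%N + (2%:R * q ^- 3 * c + q ^- 1 * c - q * c) * x 1%N 2%N + (- 2%:R * q ^- 3 * c ^+ 2 + 2%:R * q * c ^+ 2) * x 1%N 7%N + (q ^- 2 * c - c) * x 2%N 1%N)
  | 1, 0 => Some ((1%:R) * x 0%N 0%N + (2%:R * c) * x 0%N 5%N + (q ^- 3 * c + q ^- 1 * c) * x 1%N 4%N)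
  | 2, 0 => Some ((2%:R * c) * x 0%N 6%N + (1%:R) * x 1%N 0%N + (- 2%:R * q ^- 2 * c + 2%:R * c) * x 1%N 5%N + (q ^- 2 * c - c) * x 2%N 4%N)
  | 3, 0 => Some ((- q ^- 1 * c - q * c) * x 1%N 6%N + (1%:R) * x 2%N 0%N + (- q ^- 2 * c + c) * x 2%N 5%N)
  | 4, 0 => Some ((- 1%:R) * x 0%N 2%N + (2%:R * c) * x 0%N 7%N + (q ^- 2) * x 1%N 1%N)
  | 5, 0 => Some ((- 1%:R) * x 0%N 3%N + (- q ^- 3 + q) * x 1%N 2%N + (q ^- 3 * c - q ^- 1 * c - 2%:R * q * c) * x 1%N 7%N + (1%:R) * x 2%N 1%N)
  | 6, 0 => Some ((- 1%:R) * x 1%N 3%N + (q ^- 2) * x 2%N 2%N + (- q ^- 2 * c + c) * x 2%N 7%N)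
  | 7, 0 => Some ((1%:R) * x 0%N 6%N + (- q ^- 2) * x 1%N 5%N + (q ^- 2) * x 2%N 4%N)
  | _, _ => None end.

Lemma casimirV_smx :
  casimir q (mulmx (VE q)) (mulmx (VF q)) (mulmx (VK q)) (mulmx (VKi q)) 1%:M =
  smx 3 3 casimirV_tab.
Proof.
rewrite /casimir VE_smx VF_smx VK_smx VKi_smx idmx_smx ?(mulmx_smx, scalemx_smx, addmx_smx).
apply: eq_smx => i j Hi Hj; case3 i Hi; case3 j Hj; entry.
Qed.

Lemma thetaV_smx : thetaV q = smx 3 3 thetaV_tab.
Proof.
rewrite /thetaV casimirV_smx thalf_expand cval_sub01V cval_sub02V cval_sub12V.
rewrite cval_sub10V cval_sub20V cval_sub21V idmx_smx.
rewrite ?(mulmx_smx, scalemx_smx, submx_smx, addmx_smx).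
apply: eq_smx => i j Hi Hj; case3 i Hi; case3 j Hj; entry.
Qed.

Lemma casimirW_smx :
  casimir q (mulmx (LieE q c)) (mulmx (LieF q c)) (mulmx (LieK q)) (mulmx (LieKi q)) 1%:M =
  smx 8 8 casimirW_tab.
Proof.
rewrite /casimir (LieE_smx c q_neq0) (LieF_smx c q_neq0) (LieK_smx q_neq0).
rewrite (LieKi_smx q_neq0) idmx_smx ?(mulmx_smx, scalemx_smx, addmx_smx).
apply: eq_smx => i j Hi Hj; case8 i Hi; case8 j Hj; entry.
Qed.

Lemma thetaW_smx : thetaW q (LieE q c) (LieF q c) (LieK q) (LieKi q) = smx 8 8 thetaW_tab.
Proof.
rewrite /thetaW casimirW_smx thalf_expand cval_sub01V cval_sub02V cval_sub12V.
rewrite cval_sub10V cval_sub20V cval_sub21V idmx_smx.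
rewrite ?(mulmx_smx, scalemx_smx, submx_smx, addmx_smx).
apply: eq_smx => i j Hi Hj; case8 i Hi; case8 j Hj; entry.
Qed.

Lemma theta_tact_smx f :
  tact (thetaV q) (thetaW q (LieE q c) (LieF q c) (LieK q) (LieKi q)) (smx 3 8 f) =
  smx 3 8 (theta_tact_tab (fun i j => oval (f i j))).
Proof.
rewrite /tact thetaV_smx thetaW_smx [smx 3 8 f]smx_oval ?(mulmx_smx, trmx_smx).
apply: eq_smx => i j Hi Hj; case3 i Hi; case8 j Hj; entry.
Qed.

Lemma qfact0 : qfact q 0 = 1. Proof. by rewrite /qfact big_geq. Qed.

Lemma qfact1 : qfact q 1 = 1. Proof. rewrite /qfact big_nat1 /qint; field_q. Qed.

Lemma qfact2 : qfact q 2 = q + q^-1.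
Proof. rewrite /qfact big_nat_recr //= big_nat1 /qint; field_q. Qed.

Definition LieF2_tab (i j : nat) : option K :=
  match i, j with
  | 3, 1 => Some (- q ^- 1 - q)
  | 6, 4 => Some (- q ^- 1 - q)
  | _, _ => None end.

Lemma LieF2_smx : LieF q c *m LieF q c = smx 8 8 LieF2_tab.
Proof.
rewrite (LieF_smx c q_neq0) mulmx_smx.
by apply: eq_smx => i j Hi Hj; case8 i Hi; case8 j Hj; entry.
Qed.

Lemma VE3_eq0 : VE q *m (VE q *m VE q) = 0.
Proof.
rewrite VE_smx !mulmx_smx zeromx_smx.
by apply: eq_smx => i j Hi Hj; case3 i Hi; case3 j Hj; entry.
Qed.

Lemma Rsum_smx f :
  \sum_(k < 5) (q ^+ 'C(k, 2) * (q - q^-1) ^+ k / qfact q k) *: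
                tact (VE q ^+ k) (LieF q c ^+ k) (smx 3 8 f)
   = smx 3 8 (Rsum_tab (fun i j => oval (f i j))).
Proof.
rewrite !big_ord_recr big_ord0 /= add0r qfact0 qfact1 qfact2 /tact.
rewrite !exprS !expr0 -!mulmxE -!idmxE !mulmx1 VE3_eq0 !mulmx0 !mul0mx !scaler0 !addr0 LieF2_smx.
rewrite VE_smx (LieF_smx c q_neq0) !idmx_smx [smx 3 8 f]smx_oval.
rewrite ?(mulmx_smx, trmx_smx, scalemx_smx, addmx_smx).
apply: eq_smx => i j Hi Hj; case3 i Hi; case8 j Hj; entry.
Qed.

Lemma Rmat_smx f :
  Rmat q (VE q) (LieF q c) hV hW (smx 3 8 f) = smx 3 8 (Rmat_tab (fun i j => oval (f i j))).
Proof.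
rewrite /Rmat Rsum_smx.
apply/matrixP => i j; rewrite !mxE.
case: i => [[|[|[|i]]] Hi] //; case: j => [[|[|[|[|[|[|[|[|j]]]]]]]] Hj] //.
all: by rewrite /hW /= ?big_cons ?big_nil ?hV_g3 // /hV; entry.
Qed.

Lemma mWV_smx f : mWV q c (smx 8 3 f) = smx 8 1 (mWV_tab (fun i j => oval (f i j))).
Proof.
rewrite /mWV [smx 8 3 f]smx_oval !big_ord_recr !big_ord0 /= !add0r !smxE !bv_smx !gvec_smx.
rewrite !(clmul_smx c q_neq0) !scalemx_smx !addmx_smx.
apply: eq_smx => i j Hi Hj; case8 i Hi; case1 j Hj; entry.
Qed.

Lemma mWV_nbraid_smx f :
  mWV q c (nbraid q (LieE q c) (LieF q c) (LieK q) (LieKi q) hW (smx 3 8 f)) =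
  smx 8 1 (mWV_nbraid_tab (fun i j => oval (f i j))).
Proof.
rewrite /nbraid /braid thalf_Ctens_smx theta_tact_smx Rmat_smx trmx_smx mWV_smx.
apply: eq_smx => i j Hi Hj; case8 i Hi; case1 j Hj; entry.
Qed.

Definition IotaGen0_tab (i j : nat) : option K :=
  match i, j with
  | 0, 3 => Some (c)
  | 1, 5 => Some (- c)
  | 2, 6 => Some (- c)
  | 4, 7 => Some (c)
  | _, _ => None end.

Definition IotaGen1_tab (i j : nat) : option K :=
  match i, j with
  | 0, 2 => Some (q ^- 3 * c + q ^- 1 * c)
  | 0, 7 => Some (- q ^- 3 * c ^+ 2 + q * c ^+ 2)
  | 1, 4 => Some (- q ^- 3 * c - q ^- 1 * c)
  | 2, 5 => Some (q ^- 2 * c - c)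
  | 3, 6 => Some (q ^- 1 * c + q * c)
  | 5, 7 => Some (- q ^- 1 * c - q * c)
  | _, _ => None end.

Definition IotaGen2_tab (i j : nat) : option K :=
  match i, j with
  | 0, 1 => Some (q ^- 2 * c)
  | 2, 4 => Some (c)
  | 3, 5 => Some (q ^- 2 * c)
  | 6, 7 => Some (c)
  | _, _ => None end.

Definition IotaGen_tab (g i j : nat) : option K :=
  match g with 0 => IotaGen0_tab i j | 1 => IotaGen1_tab i j | _ => IotaGen2_tab i j end.

Definition dCl_tab (i j : nat) : option K :=
  match i, j with
  | 0, 2 => Some (- q ^- 1 - q)
  | 4, 1 => Some (- c ^- 1)
  | 5, 2 => Some (q ^- 1 * c ^- 1 + q * c ^- 1)
  | 5, 7 => Some (- q ^- 1 - q)
  | 6, 3 => Some (- c ^- 1)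
  | _, _ => None end.

Definition parity_diag (i : nat) : K :=
  match i with 0 => 1 | 1 | 2 | 3 => -1 | 4 | 5 | 6 => 1 | _ => -1 end.

Lemma parity_smx : parity K = smx 8 8 (fun i j => if i == j then Some (parity_diag i) else None).
Proof.
apply/matrixP => i j; rewrite !mxE.
case: i => [[|[|[|[|[|[|[|[|i]]]]]]]] Hi] //; case: j => [[|[|[|[|[|[|[|[|j]]]]]]]] Hj] //; entry.
Qed.

Lemma IotaGenCl_smx (g : 'I_3) : IotaGenCl q c g = smx 8 8 (IotaGen_tab g).
Proof.
apply/matrixP => k m; rewrite mxE /iota1Cl bv3_smx embV_smx bv_smx parity_smx.
rewrite mulmx_smx trmx_smx mulmx_smx mWV_nbraid_smx (clmul_smx c q_neq0).
rewrite submx_smx scalemx_smx !smxE.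
case: g => [[|[|[|g]]] Hg] //; case: m => [[|[|[|[|[|[|[|[|m]]]]]]]] Hm] //.
all: by case: k => [k Hk]; case8 k Hk; entry.
Qed.

Hypothesis c_neq0 : c != 0.

Lemma dCl_smx : dCl q c = smx 8 8 dCl_tab.
Proof.
apply/matrixP => k m; rewrite mxE /gammaq !bv_smx !i8K // parity_smx.
rewrite ?(mulmx_smx, scalemx_smx, addmx_smx, oppmx_smx) !(clmul_smx c q_neq0) submx_smx !smxE.
case: m => [[|[|[|[|[|[|[|[|m]]]]]]]] Hm] //; case: k => [k Hk]; case8 k Hk; entry.
Qed.

Definition deg_nat (i : nat) : nat :=
  match i with 0 => 0 | 1 | 2 | 3 => 1 | 4 | 5 | 6 => 2 | _ => 3 end.

Lemma deg_natE (k : 'I_8) : deg k = deg_nat k.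
Proof. by case: k => [[|[|[|[|[|[|[|[|k]]]]]]]] Hk]. Qed.

Definition IotaGenLam_tab (g i j : nat) : option K :=
  if (deg_nat i).+1 == deg_nat j then IotaGen_tab g i j else None.

Lemma IotaGenLam_smx (g : 'I_3) : IotaGenLam q c g = smx 8 8 (IotaGenLam_tab g).
Proof.
apply/matrixP => k m; rewrite /IotaGenLam IotaGenCl_smx !mxE !deg_natE /IotaGenLam_tab.
by case: ifP.
Qed.

Definition dLam_tab (i j : nat) : option K :=
  if deg_nat i == (deg_nat j).+1 then dCl_tab i j else None.

Lemma dLam_smx : dLam q c = smx 8 8 dLam_tab.
Proof. apply/matrixP => k m; rewrite /dLam dCl_smx !mxE !deg_natE /dLam_tab; by case: ifP. Qed.

Definition iotaCl_tab (x : nat -> nat -> K) (i j : nat) : option K :=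
  match i, j with
  | 0, 0 => Some ((1%:R) * x 0%N 0%N)
  | 0, 1 => Some ((q ^- 2 * c) * x 3%N 0%N)
  | 0, 2 => Some ((q ^- 3 * c + q ^- 1 * c) * x 2%N 0%N)
  | 0, 3 => Some ((c) * x 1%N 0%N)
  | 0, 4 => Some ((q ^- 3 * c ^+ 2 + q ^- 1 * c ^+ 2) * x 6%N 0%N)
  | 0, 5 => Some ((q ^- 2 * c ^+ 2) * x 5%N 0%N)
  | 0, 6 => Some ((q ^- 1 * c ^+ 2 + q * c ^+ 2) * x 4%N 0%N)
  | 0, 7 => Some ((- q ^- 3 * c ^+ 2 + q * c ^+ 2) * x 2%N 0%N + (q ^- 1 * c ^+ 3 + q * c ^+ 3) * x 7%N 0%N)
  | 1, 1 => Some ((1%:R) * x 0%N 0%N)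
  | 1, 4 => Some ((- q ^- 3 * c - q ^- 1 * c) * x 2%N 0%N)
  | 1, 5 => Some ((- c) * x 1%N 0%N)
  | 1, 7 => Some ((q ^- 1 * c ^+ 2 + q * c ^+ 2) * x 4%N 0%N)
  | 2, 2 => Some ((1%:R) * x 0%N 0%N)
  | 2, 4 => Some ((c) * x 3%N 0%N)
  | 2, 5 => Some ((q ^- 2 * c - c) * x 2%N 0%N)
  | 2, 6 => Some ((- c) * x 1%N 0%N)
  | 2, 7 => Some ((- c ^+ 2) * x 5%N 0%N)
  | 3, 3 => Some ((1%:R) * x 0%N 0%N)
  | 3, 5 => Some ((q ^- 2 * c) * x 3%N 0%N)
  | 3, 6 => Some ((q ^- 1 * c + q * c) * x 2%N 0%N)
  | 3, 7 => Some ((q ^- 1 * c ^+ 2 + q * c ^+ 2) * x 6%N 0%N)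
  | 4, 4 => Some ((1%:R) * x 0%N 0%N)
  | 4, 7 => Some ((c) * x 1%N 0%N)
  | 5, 5 => Some ((1%:R) * x 0%N 0%N)
  | 5, 7 => Some ((- q ^- 1 * c - q * c) * x 2%N 0%N)
  | 6, 6 => Some ((1%:R) * x 0%N 0%N)
  | 6, 7 => Some ((c) * x 3%N 0%N)
  | 7, 7 => Some ((1%:R) * x 0%N 0%N)
  | _, _ => None end.

(* Passing to the associated graded only loses the scalar component of
   iota_{v_0} (v_2 v_0 v_{-2}), which drops the degree by three. *)
Definition iotaLam_tab (x : nat -> nat -> K) (i j : nat) : option K :=
  if (i == 0%N) && (j == 7%N) then Some ((q ^- 1 * c ^+ 3 + q * c ^+ 3) * x 7%N 0%N)
  else iotaCl_tab x i j.

Lemma iotaCl_smx f : iotaCl q c (smx 8 1 f) = smx 8 8 (iotaCl_tab (fun i j => oval (f i j))).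
Proof.
rewrite /iotaCl /iotaExt [smx 8 1 f]smx_oval !big_ord_recr big_ord0 /= add0r !smxE.
rewrite !IotaGenCl_smx !g3K // !idmx_smx ?(mulmx_smx, scalemx_smx, addmx_smx).
apply: eq_smx => i j Hi Hj; case8 i Hi; case8 j Hj; entry.
Qed.

Lemma iotaLam_smx f : iotaLam q c (smx 8 1 f) = smx 8 8 (iotaLam_tab (fun i j => oval (f i j))).
Proof.
rewrite /iotaLam /iotaExt [smx 8 1 f]smx_oval !big_ord_recr big_ord0 /= add0r !smxE.
rewrite !IotaGenLam_smx !g3K // !idmx_smx ?(mulmx_smx, scalemx_smx, addmx_smx).
apply: eq_smx => i j Hi Hj; case8 i Hi; case8 j Hj; rewrite /IotaGenLam_tab; entry.
Qed.

Lemma iotaCl_action :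
  is_equiv_action q (LieE q c) (LieF q c) (LieK q) (LieKi q) (iotaCl q c).
Proof.
split=> [a xi eta | | xi eta | xi].
- exact: iotaExt_linear.
- exact: iotaExt1.
- rewrite [xi]smx_of_mx [eta]smx_of_mx (clmul_smx 0 q_neq0) !iotaCl_smx mulmx_smx.
  apply: eq_smx => i j Hi Hj; case8 i Hi; case8 j Hj; entry.
- rewrite [xi]smx_of_mx (LieE_smx c q_neq0) (LieF_smx c q_neq0) (LieK_smx q_neq0).
  rewrite (LieKi_smx q_neq0) (LieE_smx 0 q_neq0) (LieF_smx 0 q_neq0).
  rewrite ?(iotaCl_smx, mulmx_smx, addmx_smx).
  split; apply: eq_smx => i j Hi Hj; case8 i Hi; case8 j Hj; entry.
Qed.

Lemma dCl_equivariant :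
  is_equiv_differential (LieE q c) (LieF q c) (LieK q) (LieKi q) (dCl q c).
Proof.
rewrite /is_equiv_differential dCl_smx (LieE_smx c q_neq0) (LieF_smx c q_neq0).
rewrite (LieK_smx q_neq0) (LieKi_smx q_neq0) zeromx_smx ?mulmx_smx.
split; apply: eq_smx => i j Hi Hj; case8 i Hi; case8 j Hj; entry.
Qed.

Lemma dCl_cartan : cartan q (LieE q c) (LieF q c) (LieK q) (iotaCl q c) (dCl q c).
Proof.
move=> a b e Lx xi; rewrite /Lx /xi !bv_smx !i8K // dCl_smx.
rewrite (LieE_smx c q_neq0) (LieF_smx c q_neq0) (LieK_smx q_neq0).
rewrite ?(scalemx_smx, addmx_smx, iotaCl_smx, mulmx_smx, submx_smx).
apply: eq_smx => i j Hi Hj; case8 i Hi; case8 j Hj; entry.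
Qed.

Lemma dCl_Leibniz a b :
  dCl q c *m clmul q c a b =
    clmul q c (dCl q c *m a) b + clmul q c (parity K *m a) (dCl q c *m b).
Proof.
rewrite [a]smx_of_mx [b]smx_of_mx dCl_smx parity_smx.
rewrite ?((clmul_smx c q_neq0), mulmx_smx, addmx_smx).
apply: eq_smx => i j Hi Hj; case8 i Hi; case1 j Hj; entry.
Qed.

Lemma Cl_qdiff_algebra :
  qdiff_algebra q (LieE q c) (LieF q c) (LieK q) (LieKi q) (iotaCl q c) (dCl q c)
                (clmul q c) (parity K).
Proof.
split; first split.
- exact: Lie_Uq_module.
- exact: iotaCl_action.
- exact: dCl_equivariant.
- exact: dCl_cartan.
- exact: Lie_module_algebra.
- exact: dCl_Leibniz.
Qed.

Lemma iotaLam_action :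
  is_equiv_action q (LieE q 0) (LieF q 0) (LieK q) (LieKi q) (iotaLam q c).
Proof.
split=> [a xi eta | | xi eta | xi].
- exact: iotaExt_linear.
- exact: iotaExt1.
- rewrite [xi]smx_of_mx [eta]smx_of_mx (clmul_smx 0 q_neq0) !iotaLam_smx mulmx_smx.
  apply: eq_smx => i j Hi Hj; case8 i Hi; case8 j Hj; entry.
- rewrite [xi]smx_of_mx (LieE_smx 0 q_neq0) (LieF_smx 0 q_neq0) (LieK_smx q_neq0).
  rewrite (LieKi_smx q_neq0) ?(iotaLam_smx, mulmx_smx, addmx_smx).
  split; apply: eq_smx => i j Hi Hj; case8 i Hi; case8 j Hj; entry.
Qed.

Lemma dLam_equivariant :
  is_equiv_differential (LieE q 0) (LieF q 0) (LieK q) (LieKi q) (dLam q c).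
Proof.
rewrite /is_equiv_differential dLam_smx (LieE_smx 0 q_neq0) (LieF_smx 0 q_neq0).
rewrite (LieK_smx q_neq0) (LieKi_smx q_neq0) zeromx_smx ?mulmx_smx.
split; apply: eq_smx => i j Hi Hj; case8 i Hi; case8 j Hj; rewrite /dLam_tab; entry.
Qed.

Lemma dLam_cartan : cartan q (LieE q 0) (LieF q 0) (LieK q) (iotaLam q c) (dLam q c).
Proof.
move=> a b e Lx xi; rewrite /Lx /xi !bv_smx !i8K // dLam_smx.
rewrite (LieE_smx 0 q_neq0) (LieF_smx 0 q_neq0) (LieK_smx q_neq0).
rewrite ?(scalemx_smx, addmx_smx, iotaLam_smx, mulmx_smx, submx_smx).
apply: eq_smx => i j Hi Hj; case8 i Hi; case8 j Hj; rewrite /dLam_tab; entry.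
Qed.

Lemma dLam_Leibniz a b :
  dLam q c *m clmul q 0 a b =
    clmul q 0 (dLam q c *m a) b + clmul q 0 (parity K *m a) (dLam q c *m b).
Proof.
rewrite [a]smx_of_mx [b]smx_of_mx dLam_smx parity_smx.
rewrite ?((clmul_smx 0 q_neq0), mulmx_smx, addmx_smx).
apply: eq_smx => i j Hi Hj; case8 i Hi; case1 j Hj; rewrite /dLam_tab; entry.
Qed.

Lemma Lam_qdiff_algebra :
  qdiff_algebra q (LieE q 0) (LieF q 0) (LieK q) (LieKi q) (iotaLam q c) (dLam q c)
                (clmul q 0) (parity K).
Proof.
split; first split.
- exact: Lie_Uq_module.
- exact: iotaLam_action.
- exact: dLam_equivariant.
- exact: dLam_cartan.
- exact: Lie_module_algebra.
- exact: dLam_Leibniz.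
Qed.

End StructureMaps.

Theorem mainTheorem6 (R : realType) (q c : (complex R))
    (hq0 : q != 0) (hq : forall n : nat, (0 < n)%N -> q ^+ n != 1)
    (hc : c != 0) :
  qdiff_algebra q (LieE q c) (LieF q c) (LieK q) (LieKi q) (iotaCl q c) (dCl q c)
                (clmul q c) (parity (complex R)) /\
  qdiff_algebra q (LieE q 0) (LieF q 0) (LieK q) (LieKi q) (iotaLam q c) (dLam q c)
                (clmul q 0) (parity (complex R)).
Proof.
have q_not_root n : (0 < n <= 8)%N -> q ^+ n != 1 by case/andP=> n_gt0 _; exact: hq.
have [Phi1 Phi2 Phi4 [Phi3 Phi6 Phi8]] := cyclotomic_neq0 q_not_root.
have two_neq0 : 2%:R != 0 :> complex R by rewrite pnatr_eq0.
by split; [apply: Cl_qdiff_algebra | apply: Lam_qdiff_algebra].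
Qed.
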